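(* There exist 4-GDDs of types $57^8 174^1$, $57^8 177^1$, $57^8 180^1$, $57^8 183^1$, $57^8 186^1$, $57^8 189^1$, $57^8 192^1$ and $57^8 195^1$.
   Context: A 4-GDD of type $g_1^{u_1}\cdots g_r^{u_r}$ is a triple $(V,\mathcal G,\mathcal B)$ where $V$ is a set of $u_1g_1+\cdots+u_rg_r$ points, $\mathcal G$ is a partition of $V$ into $u_i$ groups of size $g_i$ for each $i$, and $\mathcal B$ is a non-empty collection of 4-element subsets (blocks) such that every pair of points from distinct groups lies in exactly one block and no pair from the same group lies in any block. *)

From mathcomp Require Import all_boot.
Set Implicit Arguments. Unset Strict Implicit. Unset Printing Implicit Defensive.

Definition is_4GDD (V : finType) (G B : {set {set V}}) : Prop :=
  [/\ partition G [set: V],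
      B != set0,
      (forall b, b \in B -> #|b| = 4),
      (forall x y, pblock G x != pblock G y ->
         #|[set b in B | (x \in b) && (y \in b)]| = 1) &
      (forall x y, x != y -> pblock G x = pblock G y ->
         forall b, b \in B -> ~~ ((x \in b) && (y \in b)))].

(* The type of the GDD, as the multiset (list up to permutation) of
   group sizes: type g1^u1 ... gr^ur is the list with ui copies of gi. *)
Definition has_type (V : finType) (G : {set {set V}}) (t : seq nat) : Prop :=
  perm_eq [seq #|X : {set V}| | X <- enum (mem G)] t.

From mathcomp Require Import all_boot zify.
Set Implicit Arguments. Unset Strict Implicit. Unset Printing Implicit Defensive.

(* The blocks are the translates, under the cyclic group Z_57, of explicit base
   blocks. The points form 8 groups of size 57, each a copy of Z_57 acted on by
   translation, and a group of size 3J (m = 3J, 58 <= J <= 65) made of J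
   triples on which Z_57 acts through Z_3. Z_57 acts freely on pairs of points
   from distinct groups, so the translates of the base blocks form a 4-GDD as
   soon as every orbit of such pairs is met exactly once by the pairs inside
   the base blocks; labelling the pair orbits by integer keys turns this
   condition into a computation. *)

Fixpoint ordered_pairs (T : Type) (s : seq T) : seq (T * T) :=
  if s is x :: s' then [seq (x, y) | y <- s'] ++ ordered_pairs s' else [::].

Lemma mem_ordered_pairs (T : eqType) (r : rel T) s x y :
  pairwise r s -> (forall a b, r a b -> ~~ r b a) ->
  ((x, y) \in ordered_pairs s) = [&& x \in s, y \in s & r x y].
Proof.
elim: s => //= z s IHs /andP[r_z r_s] r_asym.
rewrite mem_cat IHs // !inE; apply/idP/idP.
- case/orP=> [/mapP[w w_s [-> ->]] | /and3P[-> -> ->]]; last by rewrite !orbT.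
  by rewrite eqxx w_s orbT (allP r_z).
- case/and3P=> /predU1P[-> | x_s] /predU1P[y_z | y_s] r_xy.
  + by move: r_xy (r_asym _ _ r_xy); rewrite y_z => ->.
  + by rewrite map_f.
  + by move: r_xy (r_asym _ _ r_xy); rewrite y_z (allP r_z).
  + by rewrite x_s y_s r_xy orbT.
Qed.

Lemma card_ord_mem n (s : seq nat) :
  uniq s -> all (gtn n) s -> #|[set v : 'I_n | (v : nat) \in s]| = size s.
Proof.
move=> s_uniq s_lt; rewrite cardE -(size_map val); apply: perm_size.
apply: uniq_perm => [|//|x]; first by rewrite (map_inj_uniq val_inj) enum_uniq.
apply/mapP/idP => [[v] | x_s]; first by rewrite mem_enum inE => v_s ->.
by exists (Ordinal (allP s_lt x x_s)); rewrite // mem_enum inE.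
Qed.

Lemma map_uniq_inj_in (T1 T2 : eqType) (f : T1 -> T2) (s : seq T1) :
  uniq (map f s) -> {in s &, injective f}.
Proof.
elim: s => //= z s IHs /andP[fz_s fs_uniq] x y.
rewrite !inE => /predU1P[-> | x_s] /predU1P[-> | y_s] // eq_f.
- by move: fz_s; rewrite eq_f map_f.
- by move: fz_s; rewrite -eq_f map_f.
- exact: IHs.
Qed.

Lemma count_divn_iota d k i :
  count (fun x => x %/ d == i) (iota 0 (k * d)) = d * (i < k).
Proof.
case: (posnP d) => [-> | d_gt0]; first by rewrite muln0.
elim: k => [|k IHk]; first by rewrite muln0.
rewrite mulSnr iotaD count_cat IHk add0n.
rewrite (@eq_in_count _ _ (fun=> k == i)) => [|x]; last first.
  rewrite mem_iota => /andP[lo hi]; suff -> : x %/ d = k by [].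
  by apply/eqP; rewrite eqn_leq -ltnS ltn_divLR // leq_divRL // mulSnr hi lo.
case: (k == i) / eqP => [<- | ne_ki];
  rewrite ?[count _ _]count_predT ?[count _ _]count_pred0 ?size_iota; lia.
Qed.

Section CyclicDevelopment.

Variables (n q m : nat) (grp : nat -> nat) (shift : nat -> nat -> nat).
Variables (key : nat -> nat -> nat) (bb : seq (seq nat)).

Hypothesis grp_lt : forall x, x < n -> grp x < m.
Hypothesis grp_onto : forall i, i < m -> exists2 x, x < n & grp x = i.
Hypothesis two_groups : 1 < m.
Hypothesis grp_shift : forall g x, grp (shift g x) = grp x.
Hypothesis shift_lt : forall g x, x < n -> shift g x < n.
Hypothesis shift_free : forall g g' x y, g < q -> g' < q -> grp x < grp y ->
  (shift g x, shift g y) = (shift g' x, shift g' y) -> g = g'.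
Hypothesis key_shift : forall g x y, grp x < grp y -> key (shift g x) (shift g y) = key x y.
Hypothesis key_orbit : forall x y x' y', grp x < grp y -> grp x' < grp y' ->
  key x y = key x' y' -> exists2 g, g < q & (shift g x', shift g y') = (x, y).

Definition base_pairs := [seq (b, p) | b <- bb, p <- ordered_pairs b].
Definition base_keys := [seq key p.2.1 p.2.2 | p <- base_pairs].

Hypothesis base_size : forall b, b \in bb -> size b = 4.
Hypothesis base_lt : forall b, b \in bb -> all (gtn n) b.
Hypothesis base_cross : forall b, b \in bb -> pairwise [rel x y | grp x < grp y] b.
Hypothesis base_keys_uniq : uniq base_keys.
Hypothesis base_keys_cover : forall x y, x < n -> y < n -> grp x < grp y -> key x y \in base_keys.

Definition fibre i : {set 'I_n} := [set v : 'I_n | grp v == i].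
Definition fibres : {set {set 'I_n}} := [set fibre i | i : 'I_m].

Definition dev_block g b : {set 'I_n} := [set v : 'I_n | (v : nat) \in map (shift g) b].
Definition dev_blocks : {set {set 'I_n}} :=
  [set X | [exists g : 'I_q, has (fun b => X == dev_block g b) bb]].

Lemma mem_base_pairs b x y :
  ((b, (x, y)) \in base_pairs) = [&& b \in bb, x \in b, y \in b & grp x < grp y].
Proof.
have grp_asym a c : grp a < grp c -> ~~ (grp c < grp a) by move/ltnW; rewrite leqNgt.
apply/allpairsPdep/and4P => [[b' [[x' y'] [b'_bb p_b' [-> -> ->]]]] | [b_bb x_b y_b xy]].
  by move: p_b'; rewrite (mem_ordered_pairs _ _ (base_cross b'_bb) grp_asym) => /and3P[].
exists b, (x, y); split=> //.
by rewrite (mem_ordered_pairs _ _ (base_cross b_bb) grp_asym) x_b y_b.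
Qed.

Lemma base_pairs_inj b b' x y x' y' :
  (b, (x, y)) \in base_pairs -> (b', (x', y')) \in base_pairs ->
  key x y = key x' y' -> (b, x, y) = (b', x', y').
Proof.
move=> in_b in_b' eq_key.
by case: (map_uniq_inj_in base_keys_uniq in_b in_b' eq_key) => -> -> ->.
Qed.

Lemma mem_dev_blocks X :
  reflect (exists g : 'I_q, exists2 b, b \in bb & X = dev_block g b) (X \in dev_blocks).
Proof.
rewrite inE; apply: (iffP existsP) => [[g /hasP[b b_bb /eqP ->]] | [g [b b_bb ->]]].
  by exists g, b.
by exists g; apply/hasP; exists b.
Qed.

Lemma base_grp_uniq b : b \in bb -> uniq (map grp b).
Proof.
move/base_cross; rewrite -(pairwise_map grp ltn) => lt_b.
by apply: (sorted_uniq ltn_trans ltnn); apply: pairwise_sorted.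
Qed.

Lemma card_dev_block g b : b \in bb -> #|dev_block g b| = 4.
Proof.
move=> b_bb; rewrite card_ord_mem ?size_map ?base_size //.
  by apply: (@map_uniq _ _ grp); rewrite -map_comp (eq_map (grp_shift g)) base_grp_uniq.
by rewrite all_map; apply/allP => x x_b; exact: shift_lt (allP (base_lt b_bb) x x_b).
Qed.

Lemma dev_block_grp_inj g b (v w : 'I_n) : b \in bb ->
  v \in dev_block g b -> w \in dev_block g b -> grp v = grp w -> v = w.
Proof.
move=> b_bb; rewrite !inE => /mapP[x x_b vx] /mapP[y y_b wy].
rewrite vx wy !grp_shift => eq_grp; apply: ord_inj.
by rewrite vx wy (map_uniq_inj_in (base_grp_uniq b_bb) x_b y_b eq_grp).
Qed.

Lemma card_dev_blocks_pair (x y : 'I_n) : grp x < grp y ->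
  #|[set X in dev_blocks | (x \in X) && (y \in X)]| = 1.
Proof.
move=> xy; have /mapP[[b [x0 y0]] in_b0 /= key0] :=
  base_keys_cover (ltn_ord x) (ltn_ord y) xy.
have := in_b0; rewrite mem_base_pairs => /and4P[b_bb x0_b y0_b xy0].
have [g g_q /pair_equal_spec[gx0 gy0]] := key_orbit xy xy0 key0.
apply/eqP/cards1P; exists (dev_block g b); apply/setP => X; rewrite in_set1 in_set.
apply/andP/eqP => [[/mem_dev_blocks[g' [b' b'_bb ->]] /andP[]] | ->]; last first.
  split; first by apply/mem_dev_blocks; exists (Ordinal g_q), b.
  by rewrite !inE -gx0 -gy0 !map_f.
rewrite !inE => /mapP[x1 x1_b' gx1] /mapP[y1 y1_b' gy1].
have xy1 : grp x1 < grp y1 by rewrite -(grp_shift g' x1) -(grp_shift g' y1) -gx1 -gy1.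
have in_b1 : (b', (x1, y1)) \in base_pairs by rewrite mem_base_pairs b'_bb x1_b' y1_b'.
have key1 : key x1 y1 = key x0 y0 by rewrite -(key_shift g' xy1) -gx1 -gy1.
case: (base_pairs_inj in_b1 in_b0 key1) => -> eq_x eq_y; subst x1 y1.
suff -> : g' = Ordinal g_q by [].
apply: val_inj; apply: (shift_free (ltn_ord g') g_q xy0).
by rewrite -gx1 -gy1 gx0 gy0.
Qed.

Lemma fibre_in_fibres (v : 'I_n) : fibre (grp v) \in fibres.
Proof. by apply/imsetP; exists (Ordinal (grp_lt (ltn_ord v))). Qed.

Lemma fibre_nonempty (i : 'I_m) : exists v, v \in fibre i.
Proof. by have [x x_n xi] := grp_onto (ltn_ord i); exists (Ordinal x_n); rewrite inE xi. Qed.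

Lemma fibre_inj : injective (fun i : 'I_m => fibre i).
Proof.
move=> i j eq_ij; have [v v_i] := fibre_nonempty i.
have v_j : v \in fibre j by rewrite -eq_ij.
by apply: ord_inj; move: v_i v_j; rewrite !inE => /eqP <- /eqP.
Qed.

Lemma fibres_partition : partition fibres [set: 'I_n].
Proof.
apply/and3P; split.
- apply/eqP/setP => v; rewrite inE; apply/bigcupP.
  by exists (fibre (grp v)); rewrite ?fibre_in_fibres ?inE.
- apply/trivIsetP => _ _ /imsetP[i _ ->] /imsetP[j _ ->] neq_ij.
  apply/pred0P => v /=; rewrite !inE; apply/andP => -[/eqP vi /eqP vj].
  by rewrite -vi -vj eqxx in neq_ij.
- apply/imsetP => -[i _ fibre_i0]; have [v] := fibre_nonempty i.
  by rewrite -fibre_i0 inE.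
Qed.

Lemma pblock_fibres (v : 'I_n) : pblock fibres v = fibre (grp v).
Proof.
apply: def_pblock; last by rewrite inE.
  by case/and3P: fibres_partition.
exact: fibre_in_fibres.
Qed.

Lemma card_fibre i : #|fibre i| = count (fun x => grp x == i) (iota 0 n).
Proof.
rewrite cardsE cardE /enum_mem size_filter -enumT -val_enum_ord count_map.
by apply: eq_count.
Qed.

Lemma fibres_type : has_type fibres [seq count (fun x => grp x == i) (iota 0 n) | i <- iota 0 m].
Proof.
have perm_fibres : perm_eq (enum (mem fibres)) [seq fibre i | i : 'I_m <- enum 'I_m].
  apply: uniq_perm; rewrite ?enum_uniq ?(map_inj_uniq fibre_inj) ?enum_uniq // => X.
  by rewrite mem_enum; apply/imsetP/mapP => -[i _ ->]; exists i; rewrite ?mem_enum.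
apply: perm_trans (perm_map _ perm_fibres) _.
rewrite -[iota 0 m]val_enum_ord -!map_comp; under eq_map => i do rewrite /= card_fibre.
exact: perm_refl.
Qed.

Theorem dev_blocks_4GDD : is_4GDD fibres dev_blocks.
Proof.
split.
- exact: fibres_partition.
- have [x x_n x0] := grp_onto (ltnW two_groups).
  have [y y_n y1] := grp_onto two_groups.
  have xy : grp (Ordinal x_n) < grp (Ordinal y_n) by rewrite /= x0 y1.
  have /eqP/cards1P[X def_X] := card_dev_blocks_pair xy.
  by apply/set0Pn; exists X; move: (set11 X); rewrite -def_X inE => /andP[].
- by move=> X /mem_dev_blocks[g [b b_bb ->]]; apply: card_dev_block.
- move=> x y; rewrite !pblock_fibres => neq_xy.
  have : grp x != grp y by apply: contraNneq neq_xy => ->.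
  case: ltngtP => // [xy | yx] _; first exact: card_dev_blocks_pair.
  by rewrite -(card_dev_blocks_pair yx); apply: eq_card => X; rewrite !in_set (andbC (x \in X)).
- move=> x y neq_xy; rewrite !pblock_fibres => eq_fib _ /mem_dev_blocks[g [b b_bb ->]].
  apply: contra neq_xy => /andP[x_X y_X]; apply/eqP/(dev_block_grp_inj b_bb x_X y_X).
  have : (x : 'I_n) \in fibre (grp y) by rewrite -eq_fib inE.
  by rewrite inE => /eqP.
Qed.

End CyclicDevelopment.

(* Point [57 * i + r] (i < 8) is the element [r] of the group [i], and point
   [456 + 3 * t + r] is the element [r] of the [t]-th triple of the group [8]. *)
Definition pt_group x := if x < 456 then x %/ 57 else 8.

Definition pt_shift g x :=
  if x < 456 then 57 * (x %/ 57) + (x %% 57 + g) %% 57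
  else 456 + 3 * ((x - 456) %/ 3) + ((x - 456) %% 3 + g) %% 3.

(* The key of the orbit of (x, y), for x finite in a lower group than y: the pair
   of groups and y - x mod 57 when y is finite, the triple of y, the group of x
   and x - y mod 3 otherwise. *)
Definition pair_key x y :=
  if y < 456 then (pt_group x * 8 + pt_group y) * 57 + (y %% 57 + 57 - x %% 57) %% 57
  else 3648 + (((y - 456) %/ 3) * 8 + pt_group x) * 3 + (x %% 57 + 3 - (y - 456) %% 3) %% 3.

Definition pair_keys J :=
  [seq k <- iota 0 (3648 + 24 * J) | (3648 <= k) || (k %/ 57 %/ 8 < k %/ 57 %% 8)].

Lemma pt_group_counts J :
  [seq count (fun x => pt_group x == i) (iota 0 (456 + 3 * J)) | i <- iota 0 9]
  = nseq 8 57 ++ [:: 3 * J].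
Proof.
have finite_part i : count (fun x => pt_group x == i) (iota 0 456) = 57 * (i < 8).
  rewrite -(count_divn_iota 57 8); apply: eq_in_count => x.
  by rewrite mem_iota /pt_group => /andP[_ ->].
have infinite_part i : count (fun x => pt_group x == i) (iota 456 (3 * J)) = (i == 8) * (3 * J).
  rewrite (@eq_in_count _ _ (fun=> i == 8)) => [|x]; last first.
    by rewrite mem_iota => /andP[lo _]; rewrite /pt_group ltnNge lo eq_sym.
  by case: eqP; rewrite ?[count _ _]count_predT ?[count _ _]count_pred0 ?size_iota ?mul1n.
rewrite iotaD; under eq_map => i do rewrite count_cat finite_part infinite_part.
by rewrite /= !(mul0n, muln0, mul1n, muln1, addn0, add0n).
Qed.

Lemma pt_group_lt9 x : pt_group x < 9.
Proof. rewrite /pt_group; case: ifP; lia. Qed.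

Lemma pt_group_onto J i : 0 < J -> i < 9 -> exists2 x, x < 456 + 3 * J & pt_group x = i.
Proof.
move=> J_gt0 i_lt9; case: (ltnP i 8) => i8.
  by exists (57 * i); [lia | rewrite /pt_group ifT ?mulKn //; lia].
by exists 456; rewrite /pt_group /=; lia.
Qed.

Lemma pt_shift_finite g x : (pt_shift g x < 456) = (x < 456).
Proof. rewrite /pt_shift; case: (ltnP x 456) => x456; lia. Qed.

Lemma pt_group_shift g x : pt_group (pt_shift g x) = pt_group x.
Proof. rewrite /pt_group pt_shift_finite; case: ifP => // x456; rewrite /pt_shift x456; lia. Qed.

Lemma pt_shift_lt J g x : x < 456 + 3 * J -> pt_shift g x < 456 + 3 * J.
Proof. rewrite /pt_shift; case: ifP; lia. Qed.

Lemma lower_group_finite x y : pt_group x < pt_group y -> x < 456.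
Proof. rewrite /pt_group; case: ifP => //; case: ifP; lia. Qed.

Lemma pt_shift_free g g' x y : g < 57 -> g' < 57 -> pt_group x < pt_group y ->
  (pt_shift g x, pt_shift g y) = (pt_shift g' x, pt_shift g' y) -> g = g'.
Proof.
move=> g57 g'57 /lower_group_finite x456 [].
rewrite /pt_shift x456; lia.
Qed.

Lemma pair_key_shift g x y : pt_group x < pt_group y ->
  pair_key (pt_shift g x) (pt_shift g y) = pair_key x y.
Proof.
move=> /lower_group_finite x456; rewrite /pair_key !pt_group_shift pt_shift_finite.
rewrite /pt_shift x456; case: (ltnP y 456) => y456; lia.
Qed.

Lemma pair_key_orbit x y x' y' : pt_group x < pt_group y -> pt_group x' < pt_group y' ->
  pair_key x y = pair_key x' y' ->
  exists2 g, g < 57 & (pt_shift g x', pt_shift g y') = (x, y).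
Proof.
move=> xy x'y' eq_key; exists ((x %% 57 + 57 - x' %% 57) %% 57); first by rewrite ltn_mod.
have x456 := lower_group_finite xy; have x'456 := lower_group_finite x'y'.
move: xy x'y' eq_key; rewrite /pair_key /pt_shift /pt_group x456 x'456.
by case: (ltnP y 456) => y456; case: (ltnP y' 456) => y'456 xy x'y' eq_key;
  apply/pair_equal_spec; split; lia.
Qed.

Lemma pair_key_mem J x y : y < 456 + 3 * J -> pt_group x < pt_group y ->
  pair_key x y \in pair_keys J.
Proof.
move=> y_lt xy; have x456 := lower_group_finite xy.
move: xy; rewrite mem_filter mem_iota /pair_key /pt_group x456.
by case: (ltnP y 456) => y456 xy; apply/andP; split; lia.
Qed.

Definition base_blocks_ok J (bb : seq (seq nat)) :=
  all (fun b => [&& size b == 4, all (gtn (456 + 3 * J)) b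
                  & pairwise [rel x y | pt_group x < pt_group y] b]) bb
  && (sort leq (base_keys pair_key bb) == pair_keys J).

Lemma gdd_of_base_blocks J bb : 0 < J -> base_blocks_ok J bb ->
  exists (V : finType) (G B : {set {set V}}),
    is_4GDD G B /\ has_type G (nseq 8 57 ++ [:: 3 * J]).
Proof.
move=> J_gt0 /andP[/allP blocks_ok /eqP sorted_keys].
have perm_keys : perm_eq (base_keys pair_key bb) (pair_keys J).
  by rewrite -sorted_keys perm_sym perm_sort.
exists 'I_(456 + 3 * J), (fibres _ 9 pt_group), (dev_blocks _ 57 pt_shift bb); split.
  apply: dev_blocks_4GDD.
  - by move=> x _; apply: pt_group_lt9.
  - by move=> i; apply: pt_group_onto.
  - by [].
  - exact: pt_group_shift.
  - exact: pt_shift_lt.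
  - exact: pt_shift_free.
  - exact: pair_key_shift.
  - exact: pair_key_orbit.
  - by move=> b /blocks_ok /and3P[/eqP].
  - by move=> b /blocks_ok /and3P[].
  - by move=> b /blocks_ok /and3P[].
  - by rewrite (perm_uniq perm_keys) filter_uniq ?iota_uniq.
  - by move=> x y _ y_lt xy; rewrite (perm_mem perm_keys) pair_key_mem.
rewrite -pt_group_counts; apply: fibres_type => i; exact: pt_group_onto.
Qed.

Definition bb58 : seq (seq nat) := [::
  [:: 0; 140; 199; 456]; [:: 19; 176; 270; 456]; [:: 38; 61; 350; 456]; [:: 57; 207; 370; 456];
  [:: 95; 271; 348; 456]; [:: 114; 317; 424; 456]; [:: 133; 306; 410; 456]; [:: 266; 301; 423; 456];
  [:: 0; 164; 181; 459]; [:: 19; 185; 243; 459]; [:: 38; 91; 353; 459]; [:: 57; 192; 352; 459];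
  [:: 95; 280; 393; 459]; [:: 114; 329; 412; 459]; [:: 133; 321; 407; 459]; [:: 266; 307; 432; 459];
  [:: 57; 197; 256; 462]; [:: 76; 233; 327; 462]; [:: 8; 95; 118; 462]; [:: 28; 114; 264; 462];
  [:: 6; 152; 328; 462]; [:: 171; 374; 424; 462]; [:: 190; 363; 410; 462]; [:: 323; 358; 423; 462];
  [:: 57; 221; 238; 465]; [:: 76; 242; 300; 465]; [:: 11; 95; 148; 465]; [:: 10; 114; 249; 465];
  [:: 51; 152; 337; 465]; [:: 171; 386; 412; 465]; [:: 190; 378; 407; 465]; [:: 323; 364; 432; 465];
  [:: 114; 254; 313; 468]; [:: 133; 290; 384; 468]; [:: 65; 152; 175; 468]; [:: 85; 171; 321; 468];
  [:: 63; 209; 385; 468]; [:: 32; 228; 424; 468]; [:: 21; 247; 410; 468]; [:: 16; 380; 423; 468];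
  [:: 114; 278; 295; 471]; [:: 133; 299; 357; 471]; [:: 68; 152; 205; 471]; [:: 67; 171; 306; 471];
  [:: 108; 209; 394; 471]; [:: 44; 228; 412; 471]; [:: 36; 247; 407; 471]; [:: 22; 380; 432; 471];
  [:: 171; 311; 370; 474]; [:: 42; 190; 347; 474]; [:: 122; 209; 232; 474]; [:: 142; 228; 378; 474];
  [:: 43; 120; 266; 474]; [:: 89; 285; 424; 474]; [:: 78; 304; 410; 474]; [:: 38; 73; 423; 474];
  [:: 171; 335; 352; 477]; [:: 15; 190; 356; 477]; [:: 125; 209; 262; 477]; [:: 124; 228; 363; 477];
  [:: 52; 165; 266; 477]; [:: 101; 285; 412; 477]; [:: 93; 304; 407; 477]; [:: 38; 79; 432; 477];
  [:: 28; 228; 368; 480]; [:: 5; 99; 247; 480]; [:: 179; 266; 289; 480]; [:: 36; 199; 285; 480];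
  [:: 100; 177; 323; 480]; [:: 146; 342; 424; 480]; [:: 135; 361; 410; 480]; [:: 95; 130; 423; 480];
  [:: 10; 228; 392; 483]; [:: 14; 72; 247; 483]; [:: 182; 266; 319; 483]; [:: 21; 181; 285; 483];
  [:: 109; 222; 323; 483]; [:: 158; 342; 412; 483]; [:: 150; 361; 407; 483]; [:: 95; 136; 432; 483];
  [:: 26; 85; 285; 486]; [:: 62; 156; 304; 486]; [:: 236; 323; 346; 486]; [:: 93; 256; 342; 486];
  [:: 157; 234; 380; 486]; [:: 0; 203; 424; 486]; [:: 19; 192; 410; 486]; [:: 152; 187; 423; 486];
  [:: 50; 67; 285; 489]; [:: 71; 129; 304; 489]; [:: 239; 323; 376; 489]; [:: 78; 238; 342; 489];
  [:: 166; 279; 380; 489]; [:: 0; 215; 412; 489]; [:: 19; 207; 407; 489]; [:: 152; 193; 432; 489];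
  [:: 83; 142; 342; 492]; [:: 119; 213; 361; 492]; [:: 4; 293; 380; 492]; [:: 0; 150; 313; 492];
  [:: 38; 214; 291; 492]; [:: 57; 260; 424; 492]; [:: 76; 249; 410; 492]; [:: 209; 244; 423; 492];
  [:: 107; 124; 342; 495]; [:: 128; 186; 361; 495]; [:: 34; 296; 380; 495]; [:: 0; 135; 295; 495];
  [:: 38; 223; 336; 495]; [:: 57; 272; 412; 495]; [:: 76; 264; 407; 495]; [:: 209; 250; 432; 495];
  [:: 0; 182; 248; 498]; [:: 19; 62; 183; 498]; [:: 38; 388; 449; 498]; [:: 57; 139; 345; 498];
  [:: 76; 175; 344; 498]; [:: 114; 298; 426; 498]; [:: 152; 280; 330; 498]; [:: 228; 341; 439; 498];
  [:: 0; 179; 284; 501]; [:: 19; 71; 216; 501]; [:: 38; 391; 425; 501]; [:: 57; 127; 396; 501];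
  [:: 76; 205; 359; 501]; [:: 114; 310; 429; 501]; [:: 152; 271; 297; 501]; [:: 228; 305; 454; 501];
  [:: 57; 239; 305; 504]; [:: 76; 119; 240; 504]; [:: 46; 95; 449; 504]; [:: 3; 114; 196; 504];
  [:: 2; 133; 232; 504]; [:: 171; 355; 426; 504]; [:: 209; 337; 387; 504]; [:: 285; 398; 439; 504];
  [:: 57; 236; 341; 507]; [:: 76; 128; 273; 507]; [:: 49; 95; 425; 507]; [:: 54; 114; 184; 507];
  [:: 17; 133; 262; 507]; [:: 171; 367; 429; 507]; [:: 209; 328; 354; 507]; [:: 285; 362; 454; 507];
  [:: 114; 296; 362; 510]; [:: 133; 176; 297; 510]; [:: 103; 152; 449; 510]; [:: 60; 171; 253; 510];
  [:: 59; 190; 289; 510]; [:: 13; 228; 426; 510]; [:: 45; 266; 394; 510]; [:: 56; 342; 439; 510];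
  [:: 114; 293; 398; 513]; [:: 133; 185; 330; 513]; [:: 106; 152; 425; 513]; [:: 111; 171; 241; 513];
  [:: 74; 190; 319; 513]; [:: 25; 228; 429; 513]; [:: 12; 266; 385; 513]; [:: 20; 342; 454; 513];
  [:: 20; 171; 353; 516]; [:: 190; 233; 354; 516]; [:: 160; 209; 449; 516]; [:: 117; 228; 310; 516];
  [:: 116; 247; 346; 516]; [:: 70; 285; 426; 516]; [:: 52; 102; 323; 516]; [:: 0; 113; 439; 516];
  [:: 56; 171; 350; 519]; [:: 190; 242; 387; 519]; [:: 163; 209; 425; 519]; [:: 168; 228; 298; 519];
  [:: 131; 247; 376; 519]; [:: 82; 285; 429; 519]; [:: 43; 69; 323; 519]; [:: 0; 77; 454; 519];
  [:: 11; 77; 228; 522]; [:: 12; 247; 290; 522]; [:: 217; 266; 449; 522]; [:: 174; 285; 367; 522];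
  [:: 4; 173; 304; 522]; [:: 127; 342; 426; 522]; [:: 109; 159; 380; 522]; [:: 57; 170; 439; 522];
  [:: 8; 113; 228; 525]; [:: 45; 247; 299; 525]; [:: 220; 266; 425; 525]; [:: 225; 285; 355; 525];
  [:: 34; 188; 304; 525]; [:: 139; 342; 429; 525]; [:: 100; 126; 380; 525]; [:: 57; 134; 454; 525];
  [:: 68; 134; 285; 528]; [:: 69; 304; 347; 528]; [:: 274; 323; 449; 528]; [:: 25; 231; 342; 528];
  [:: 61; 230; 361; 528]; [:: 0; 184; 426; 528]; [:: 38; 166; 216; 528]; [:: 114; 227; 439; 528];
  [:: 65; 170; 285; 531]; [:: 102; 304; 356; 531]; [:: 277; 323; 425; 531]; [:: 13; 282; 342; 531];
  [:: 91; 245; 361; 531]; [:: 0; 196; 429; 531]; [:: 38; 157; 183; 531]; [:: 114; 191; 454; 531];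
  [:: 125; 191; 342; 534]; [:: 5; 126; 361; 534]; [:: 331; 380; 449; 534]; [:: 0; 82; 288; 534];
  [:: 19; 118; 287; 534]; [:: 57; 241; 426; 534]; [:: 95; 223; 273; 534]; [:: 171; 284; 439; 534];
  [:: 122; 227; 342; 537]; [:: 14; 159; 361; 537]; [:: 334; 380; 425; 537]; [:: 0; 70; 339; 537];
  [:: 19; 148; 302; 537]; [:: 57; 253; 429; 537]; [:: 95; 214; 240; 537]; [:: 171; 248; 454; 537];
  [:: 0; 136; 385; 540]; [:: 19; 108; 137; 540]; [:: 38; 191; 313; 540]; [:: 76; 383; 455; 540];
  [:: 95; 320; 444; 540]; [:: 114; 216; 283; 540]; [:: 190; 251; 421; 540]; [:: 228; 306; 348; 540];
  [:: 0; 130; 394; 543]; [:: 19; 63; 167; 543]; [:: 38; 227; 295; 543]; [:: 76; 377; 419; 543];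
  [:: 95; 326; 411; 543]; [:: 114; 183; 268; 543]; [:: 190; 281; 415; 543]; [:: 228; 321; 393; 543];
  [:: 43; 57; 193; 546]; [:: 76; 165; 194; 546]; [:: 95; 248; 370; 546]; [:: 41; 133; 455; 546];
  [:: 152; 377; 444; 546]; [:: 171; 273; 340; 546]; [:: 247; 308; 421; 546]; [:: 6; 285; 363; 546];
  [:: 52; 57; 187; 549]; [:: 76; 120; 224; 549]; [:: 95; 284; 352; 549]; [:: 35; 133; 419; 549];
  [:: 152; 383; 411; 549]; [:: 171; 240; 325; 549]; [:: 247; 338; 415; 549]; [:: 51; 285; 378; 549];
  [:: 100; 114; 250; 552]; [:: 133; 222; 251; 552]; [:: 28; 152; 305; 552]; [:: 98; 190; 455; 552];
  [:: 35; 209; 444; 552]; [:: 228; 330; 397; 552]; [:: 304; 365; 421; 552]; [:: 21; 63; 342; 552];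
  [:: 109; 114; 244; 555]; [:: 133; 177; 281; 555]; [:: 10; 152; 341; 555]; [:: 92; 190; 419; 555];
  [:: 41; 209; 411; 555]; [:: 228; 297; 382; 555]; [:: 304; 395; 415; 555]; [:: 36; 108; 342; 555];
  [:: 157; 171; 307; 558]; [:: 190; 279; 308; 558]; [:: 85; 209; 362; 558]; [:: 155; 247; 455; 558];
  [:: 92; 266; 444; 558]; [:: 55; 285; 387; 558]; [:: 23; 361; 421; 558]; [:: 0; 78; 120; 558];
  [:: 166; 171; 301; 561]; [:: 190; 234; 338; 561]; [:: 67; 209; 398; 561]; [:: 149; 247; 419; 561];
  [:: 98; 266; 411; 561]; [:: 40; 285; 354; 561]; [:: 53; 361; 415; 561]; [:: 0; 93; 165; 561];
  [:: 214; 228; 364; 564]; [:: 247; 336; 365; 564]; [:: 20; 142; 266; 564]; [:: 212; 304; 455; 564];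
  [:: 149; 323; 444; 564]; [:: 45; 112; 342; 564]; [:: 19; 80; 421; 564]; [:: 57; 135; 177; 564];
  [:: 223; 228; 358; 567]; [:: 247; 291; 395; 567]; [:: 56; 124; 266; 567]; [:: 206; 304; 419; 567];
  [:: 155; 323; 411; 567]; [:: 12; 97; 342; 567]; [:: 19; 110; 415; 567]; [:: 57; 150; 222; 567];
  [:: 22; 271; 285; 570]; [:: 23; 304; 393; 570]; [:: 77; 199; 323; 570]; [:: 269; 361; 455; 570];
  [:: 206; 380; 444; 570]; [:: 0; 102; 169; 570]; [:: 76; 137; 421; 570]; [:: 114; 192; 234; 570];
  [:: 16; 280; 285; 573]; [:: 53; 304; 348; 573]; [:: 113; 181; 323; 573]; [:: 263; 361; 419; 573];
  [:: 212; 380; 411; 573]; [:: 0; 69; 154; 573]; [:: 76; 167; 415; 573]; [:: 114; 207; 279; 573];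
  [:: 79; 328; 342; 576]; [:: 51; 80; 361; 576]; [:: 134; 256; 380; 576]; [:: 19; 326; 455; 576];
  [:: 38; 263; 444; 576]; [:: 57; 159; 226; 576]; [:: 133; 194; 421; 576]; [:: 171; 249; 291; 576];
  [:: 73; 337; 342; 579]; [:: 6; 110; 361; 579]; [:: 170; 238; 380; 579]; [:: 19; 320; 419; 579];
  [:: 38; 269; 411; 579]; [:: 57; 126; 211; 579]; [:: 133; 224; 415; 579]; [:: 171; 264; 336; 579];
  [:: 0; 309; 447; 582]; [:: 19; 280; 385; 582]; [:: 38; 77; 335; 582]; [:: 57; 347; 422; 582];
  [:: 76; 172; 313; 582]; [:: 114; 174; 357; 582]; [:: 133; 236; 424; 582]; [:: 152; 215; 279; 582];
  [:: 0; 318; 408; 585]; [:: 19; 271; 394; 585]; [:: 38; 113; 311; 585]; [:: 57; 356; 452; 585];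
  [:: 76; 208; 295; 585]; [:: 114; 225; 384; 585]; [:: 133; 239; 412; 585]; [:: 152; 203; 234; 585];
  [:: 57; 366; 447; 588]; [:: 43; 76; 337; 588]; [:: 95; 134; 392; 588]; [:: 5; 114; 422; 588];
  [:: 133; 229; 370; 588]; [:: 15; 171; 231; 588]; [:: 190; 293; 424; 588]; [:: 209; 272; 336; 588];
  [:: 57; 375; 408; 591]; [:: 52; 76; 328; 591]; [:: 95; 170; 368; 591]; [:: 14; 114; 452; 591];
  [:: 133; 265; 352; 591]; [:: 42; 171; 282; 591]; [:: 190; 296; 412; 591]; [:: 209; 260; 291; 591];
  [:: 24; 114; 447; 594]; [:: 100; 133; 394; 594]; [:: 50; 152; 191; 594]; [:: 62; 171; 422; 594];
  [:: 28; 190; 286; 594]; [:: 72; 228; 288; 594]; [:: 247; 350; 424; 594]; [:: 266; 329; 393; 594];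
  [:: 33; 114; 408; 597]; [:: 109; 133; 385; 597]; [:: 26; 152; 227; 597]; [:: 71; 171; 452; 597];
  [:: 10; 190; 322; 597]; [:: 99; 228; 339; 597]; [:: 247; 353; 412; 597]; [:: 266; 317; 348; 597];
  [:: 81; 171; 447; 600]; [:: 52; 157; 190; 600]; [:: 107; 209; 248; 600]; [:: 119; 228; 422; 600];
  [:: 85; 247; 343; 600]; [:: 129; 285; 345; 600]; [:: 8; 304; 424; 600]; [:: 51; 323; 386; 600];
  [:: 90; 171; 408; 603]; [:: 43; 166; 190; 603]; [:: 83; 209; 284; 603]; [:: 128; 228; 452; 603];
  [:: 67; 247; 379; 603]; [:: 156; 285; 396; 603]; [:: 11; 304; 412; 603]; [:: 6; 323; 374; 603];
  [:: 138; 228; 447; 606]; [:: 109; 214; 247; 606]; [:: 164; 266; 305; 606]; [:: 176; 285; 422; 606];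
  [:: 1; 142; 304; 606]; [:: 3; 186; 342; 606]; [:: 65; 361; 424; 606]; [:: 44; 108; 380; 606];
  [:: 147; 228; 408; 609]; [:: 100; 223; 247; 609]; [:: 140; 266; 341; 609]; [:: 185; 285; 452; 609];
  [:: 37; 124; 304; 609]; [:: 54; 213; 342; 609]; [:: 68; 361; 412; 609]; [:: 32; 63; 380; 609];
  [:: 195; 285; 447; 612]; [:: 166; 271; 304; 612]; [:: 221; 323; 362; 612]; [:: 233; 342; 422; 612];
  [:: 58; 199; 361; 612]; [:: 0; 60; 243; 612]; [:: 19; 122; 424; 612]; [:: 38; 101; 165; 612];
  [:: 204; 285; 408; 615]; [:: 157; 280; 304; 615]; [:: 197; 323; 398; 615]; [:: 242; 342; 452; 615];
  [:: 94; 181; 361; 615]; [:: 0; 111; 270; 615]; [:: 19; 125; 412; 615]; [:: 38; 89; 120; 615];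
  [:: 252; 342; 447; 618]; [:: 223; 328; 361; 618]; [:: 20; 278; 380; 618]; [:: 0; 290; 422; 618];
  [:: 19; 115; 256; 618]; [:: 57; 117; 300; 618]; [:: 76; 179; 424; 618]; [:: 95; 158; 222; 618];
  [:: 261; 342; 408; 621]; [:: 214; 337; 361; 621]; [:: 56; 254; 380; 621]; [:: 0; 299; 452; 621];
  [:: 19; 151; 238; 621]; [:: 57; 168; 327; 621]; [:: 76; 182; 412; 621]; [:: 95; 146; 177; 621];
  [:: 95; 152; 342; 624]; [:: 133; 361; 399; 624]; [:: 38; 76; 190; 624]; [:: 0; 57; 380; 624];
  [:: 19; 323; 437; 624]; [:: 209; 228; 304; 624]; [:: 247; 285; 418; 624]; [:: 114; 171; 266; 624];
  [:: 57; 209; 399; 627]; [:: 190; 342; 418; 627]; [:: 228; 380; 437; 627]; [:: 95; 171; 285; 627];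
  [:: 76; 152; 266; 627]; [:: 0; 323; 361; 627]; [:: 19; 133; 304; 627]; [:: 38; 114; 247; 627];
  [:: 114; 179; 370; 443]; [:: 114; 182; 352; 431]; [:: 28; 171; 236; 443]; [:: 10; 171; 239; 431];
  [:: 85; 228; 293; 443]; [:: 67; 228; 296; 431]; [:: 142; 285; 350; 443]; [:: 124; 285; 353; 431];
  [:: 8; 199; 342; 443]; [:: 11; 181; 342; 431]; [:: 0; 65; 256; 443]; [:: 0; 68; 238; 431];
  [:: 57; 122; 313; 443]; [:: 57; 125; 295; 431]; [:: 0; 115; 212; 377]; [:: 0; 151; 206; 383];
  [:: 35; 57; 172; 269]; [:: 41; 57; 208; 263]; [:: 92; 114; 229; 326]; [:: 98; 114; 265; 320];
  [:: 149; 171; 286; 383]; [:: 155; 171; 322; 377]; [:: 41; 206; 228; 343]; [:: 35; 212; 228; 379];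
  [:: 1; 98; 263; 285]; [:: 37; 92; 269; 285]; [:: 58; 155; 320; 342]; [:: 94; 149; 326; 342];
  [:: 57; 152; 285; 437]; [:: 0; 76; 247; 437]; [:: 0; 152; 190; 399]; [:: 57; 266; 323; 342];
  [:: 0; 171; 228; 342]; [:: 114; 190; 323; 380]].

Definition bb59 : seq (seq nat) := [::
  [:: 0; 140; 199; 456]; [:: 19; 176; 270; 456]; [:: 38; 61; 350; 456]; [:: 57; 207; 370; 456];
  [:: 95; 271; 348; 456]; [:: 114; 317; 424; 456]; [:: 133; 306; 410; 456]; [:: 266; 301; 423; 456];
  [:: 0; 164; 181; 459]; [:: 19; 185; 243; 459]; [:: 38; 91; 353; 459]; [:: 57; 192; 352; 459];
  [:: 95; 280; 393; 459]; [:: 114; 329; 412; 459]; [:: 133; 321; 407; 459]; [:: 266; 307; 432; 459];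
  [:: 57; 197; 256; 462]; [:: 76; 233; 327; 462]; [:: 8; 95; 118; 462]; [:: 28; 114; 264; 462];
  [:: 6; 152; 328; 462]; [:: 171; 374; 424; 462]; [:: 190; 363; 410; 462]; [:: 323; 358; 423; 462];
  [:: 57; 221; 238; 465]; [:: 76; 242; 300; 465]; [:: 11; 95; 148; 465]; [:: 10; 114; 249; 465];
  [:: 51; 152; 337; 465]; [:: 171; 386; 412; 465]; [:: 190; 378; 407; 465]; [:: 323; 364; 432; 465];
  [:: 114; 254; 313; 468]; [:: 133; 290; 384; 468]; [:: 65; 152; 175; 468]; [:: 85; 171; 321; 468];
  [:: 63; 209; 385; 468]; [:: 32; 228; 424; 468]; [:: 21; 247; 410; 468]; [:: 16; 380; 423; 468];
  [:: 114; 278; 295; 471]; [:: 133; 299; 357; 471]; [:: 68; 152; 205; 471]; [:: 67; 171; 306; 471];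
  [:: 108; 209; 394; 471]; [:: 44; 228; 412; 471]; [:: 36; 247; 407; 471]; [:: 22; 380; 432; 471];
  [:: 171; 311; 370; 474]; [:: 42; 190; 347; 474]; [:: 122; 209; 232; 474]; [:: 142; 228; 378; 474];
  [:: 43; 120; 266; 474]; [:: 89; 285; 424; 474]; [:: 78; 304; 410; 474]; [:: 38; 73; 423; 474];
  [:: 171; 335; 352; 477]; [:: 15; 190; 356; 477]; [:: 125; 209; 262; 477]; [:: 124; 228; 363; 477];
  [:: 52; 165; 266; 477]; [:: 101; 285; 412; 477]; [:: 93; 304; 407; 477]; [:: 38; 79; 432; 477];
  [:: 28; 228; 368; 480]; [:: 5; 99; 247; 480]; [:: 179; 266; 289; 480]; [:: 36; 199; 285; 480];
  [:: 100; 177; 323; 480]; [:: 146; 342; 424; 480]; [:: 135; 361; 410; 480]; [:: 95; 130; 423; 480];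
  [:: 10; 228; 392; 483]; [:: 14; 72; 247; 483]; [:: 182; 266; 319; 483]; [:: 21; 181; 285; 483];
  [:: 109; 222; 323; 483]; [:: 158; 342; 412; 483]; [:: 150; 361; 407; 483]; [:: 95; 136; 432; 483];
  [:: 26; 85; 285; 486]; [:: 62; 156; 304; 486]; [:: 236; 323; 346; 486]; [:: 93; 256; 342; 486];
  [:: 157; 234; 380; 486]; [:: 0; 203; 424; 486]; [:: 19; 192; 410; 486]; [:: 152; 187; 423; 486];
  [:: 50; 67; 285; 489]; [:: 71; 129; 304; 489]; [:: 239; 323; 376; 489]; [:: 78; 238; 342; 489];
  [:: 166; 279; 380; 489]; [:: 0; 215; 412; 489]; [:: 19; 207; 407; 489]; [:: 152; 193; 432; 489];
  [:: 83; 142; 342; 492]; [:: 119; 213; 361; 492]; [:: 4; 293; 380; 492]; [:: 0; 150; 313; 492];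
  [:: 38; 214; 291; 492]; [:: 57; 260; 424; 492]; [:: 76; 249; 410; 492]; [:: 209; 244; 423; 492];
  [:: 107; 124; 342; 495]; [:: 128; 186; 361; 495]; [:: 34; 296; 380; 495]; [:: 0; 135; 295; 495];
  [:: 38; 223; 336; 495]; [:: 57; 272; 412; 495]; [:: 76; 264; 407; 495]; [:: 209; 250; 432; 495];
  [:: 0; 182; 248; 498]; [:: 19; 62; 183; 498]; [:: 38; 388; 449; 498]; [:: 57; 139; 345; 498];
  [:: 76; 175; 344; 498]; [:: 114; 298; 426; 498]; [:: 152; 280; 330; 498]; [:: 228; 341; 439; 498];
  [:: 0; 179; 284; 501]; [:: 19; 71; 216; 501]; [:: 38; 391; 425; 501]; [:: 57; 127; 396; 501];
  [:: 76; 205; 359; 501]; [:: 114; 310; 429; 501]; [:: 152; 271; 297; 501]; [:: 228; 305; 454; 501];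
  [:: 57; 239; 305; 504]; [:: 76; 119; 240; 504]; [:: 46; 95; 449; 504]; [:: 3; 114; 196; 504];
  [:: 2; 133; 232; 504]; [:: 171; 355; 426; 504]; [:: 209; 337; 387; 504]; [:: 285; 398; 439; 504];
  [:: 57; 236; 341; 507]; [:: 76; 128; 273; 507]; [:: 49; 95; 425; 507]; [:: 54; 114; 184; 507];
  [:: 17; 133; 262; 507]; [:: 171; 367; 429; 507]; [:: 209; 328; 354; 507]; [:: 285; 362; 454; 507];
  [:: 114; 296; 362; 510]; [:: 133; 176; 297; 510]; [:: 103; 152; 449; 510]; [:: 60; 171; 253; 510];
  [:: 59; 190; 289; 510]; [:: 13; 228; 426; 510]; [:: 45; 266; 394; 510]; [:: 56; 342; 439; 510];
  [:: 114; 293; 398; 513]; [:: 133; 185; 330; 513]; [:: 106; 152; 425; 513]; [:: 111; 171; 241; 513];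
  [:: 74; 190; 319; 513]; [:: 25; 228; 429; 513]; [:: 12; 266; 385; 513]; [:: 20; 342; 454; 513];
  [:: 20; 171; 353; 516]; [:: 190; 233; 354; 516]; [:: 160; 209; 449; 516]; [:: 117; 228; 310; 516];
  [:: 116; 247; 346; 516]; [:: 70; 285; 426; 516]; [:: 52; 102; 323; 516]; [:: 0; 113; 439; 516];
  [:: 56; 171; 350; 519]; [:: 190; 242; 387; 519]; [:: 163; 209; 425; 519]; [:: 168; 228; 298; 519];
  [:: 131; 247; 376; 519]; [:: 82; 285; 429; 519]; [:: 43; 69; 323; 519]; [:: 0; 77; 454; 519];
  [:: 11; 77; 228; 522]; [:: 12; 247; 290; 522]; [:: 217; 266; 449; 522]; [:: 174; 285; 367; 522];
  [:: 4; 173; 304; 522]; [:: 127; 342; 426; 522]; [:: 109; 159; 380; 522]; [:: 57; 170; 439; 522];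
  [:: 8; 113; 228; 525]; [:: 45; 247; 299; 525]; [:: 220; 266; 425; 525]; [:: 225; 285; 355; 525];
  [:: 34; 188; 304; 525]; [:: 139; 342; 429; 525]; [:: 100; 126; 380; 525]; [:: 57; 134; 454; 525];
  [:: 68; 134; 285; 528]; [:: 69; 304; 347; 528]; [:: 274; 323; 449; 528]; [:: 25; 231; 342; 528];
  [:: 61; 230; 361; 528]; [:: 0; 184; 426; 528]; [:: 38; 166; 216; 528]; [:: 114; 227; 439; 528];
  [:: 65; 170; 285; 531]; [:: 102; 304; 356; 531]; [:: 277; 323; 425; 531]; [:: 13; 282; 342; 531];
  [:: 91; 245; 361; 531]; [:: 0; 196; 429; 531]; [:: 38; 157; 183; 531]; [:: 114; 191; 454; 531];
  [:: 125; 191; 342; 534]; [:: 5; 126; 361; 534]; [:: 331; 380; 449; 534]; [:: 0; 82; 288; 534];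
  [:: 19; 118; 287; 534]; [:: 57; 241; 426; 534]; [:: 95; 223; 273; 534]; [:: 171; 284; 439; 534];
  [:: 122; 227; 342; 537]; [:: 14; 159; 361; 537]; [:: 334; 380; 425; 537]; [:: 0; 70; 339; 537];
  [:: 19; 148; 302; 537]; [:: 57; 253; 429; 537]; [:: 95; 214; 240; 537]; [:: 171; 248; 454; 537];
  [:: 0; 136; 385; 540]; [:: 19; 108; 137; 540]; [:: 38; 191; 313; 540]; [:: 76; 383; 455; 540];
  [:: 95; 320; 444; 540]; [:: 114; 216; 283; 540]; [:: 190; 251; 421; 540]; [:: 228; 306; 348; 540];
  [:: 0; 130; 394; 543]; [:: 19; 63; 167; 543]; [:: 38; 227; 295; 543]; [:: 76; 377; 419; 543];
  [:: 95; 326; 411; 543]; [:: 114; 183; 268; 543]; [:: 190; 281; 415; 543]; [:: 228; 321; 393; 543];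
  [:: 43; 57; 193; 546]; [:: 76; 165; 194; 546]; [:: 95; 248; 370; 546]; [:: 41; 133; 455; 546];
  [:: 152; 377; 444; 546]; [:: 171; 273; 340; 546]; [:: 247; 308; 421; 546]; [:: 6; 285; 363; 546];
  [:: 52; 57; 187; 549]; [:: 76; 120; 224; 549]; [:: 95; 284; 352; 549]; [:: 35; 133; 419; 549];
  [:: 152; 383; 411; 549]; [:: 171; 240; 325; 549]; [:: 247; 338; 415; 549]; [:: 51; 285; 378; 549];
  [:: 100; 114; 250; 552]; [:: 133; 222; 251; 552]; [:: 28; 152; 305; 552]; [:: 98; 190; 455; 552];
  [:: 35; 209; 444; 552]; [:: 228; 330; 397; 552]; [:: 304; 365; 421; 552]; [:: 21; 63; 342; 552];
  [:: 109; 114; 244; 555]; [:: 133; 177; 281; 555]; [:: 10; 152; 341; 555]; [:: 92; 190; 419; 555];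
  [:: 41; 209; 411; 555]; [:: 228; 297; 382; 555]; [:: 304; 395; 415; 555]; [:: 36; 108; 342; 555];
  [:: 157; 171; 307; 558]; [:: 190; 279; 308; 558]; [:: 85; 209; 362; 558]; [:: 155; 247; 455; 558];
  [:: 92; 266; 444; 558]; [:: 55; 285; 387; 558]; [:: 23; 361; 421; 558]; [:: 0; 78; 120; 558];
  [:: 166; 171; 301; 561]; [:: 190; 234; 338; 561]; [:: 67; 209; 398; 561]; [:: 149; 247; 419; 561];
  [:: 98; 266; 411; 561]; [:: 40; 285; 354; 561]; [:: 53; 361; 415; 561]; [:: 0; 93; 165; 561];
  [:: 214; 228; 364; 564]; [:: 247; 336; 365; 564]; [:: 20; 142; 266; 564]; [:: 212; 304; 455; 564];
  [:: 149; 323; 444; 564]; [:: 45; 112; 342; 564]; [:: 19; 80; 421; 564]; [:: 57; 135; 177; 564];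
  [:: 223; 228; 358; 567]; [:: 247; 291; 395; 567]; [:: 56; 124; 266; 567]; [:: 206; 304; 419; 567];
  [:: 155; 323; 411; 567]; [:: 12; 97; 342; 567]; [:: 19; 110; 415; 567]; [:: 57; 150; 222; 567];
  [:: 22; 271; 285; 570]; [:: 23; 304; 393; 570]; [:: 77; 199; 323; 570]; [:: 269; 361; 455; 570];
  [:: 206; 380; 444; 570]; [:: 0; 102; 169; 570]; [:: 76; 137; 421; 570]; [:: 114; 192; 234; 570];
  [:: 16; 280; 285; 573]; [:: 53; 304; 348; 573]; [:: 113; 181; 323; 573]; [:: 263; 361; 419; 573];
  [:: 212; 380; 411; 573]; [:: 0; 69; 154; 573]; [:: 76; 167; 415; 573]; [:: 114; 207; 279; 573];
  [:: 79; 328; 342; 576]; [:: 51; 80; 361; 576]; [:: 134; 256; 380; 576]; [:: 19; 326; 455; 576];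
  [:: 38; 263; 444; 576]; [:: 57; 159; 226; 576]; [:: 133; 194; 421; 576]; [:: 171; 249; 291; 576];
  [:: 73; 337; 342; 579]; [:: 6; 110; 361; 579]; [:: 170; 238; 380; 579]; [:: 19; 320; 419; 579];
  [:: 38; 269; 411; 579]; [:: 57; 126; 211; 579]; [:: 133; 224; 415; 579]; [:: 171; 264; 336; 579];
  [:: 0; 309; 447; 582]; [:: 19; 280; 385; 582]; [:: 38; 77; 335; 582]; [:: 57; 347; 422; 582];
  [:: 76; 172; 313; 582]; [:: 114; 174; 357; 582]; [:: 133; 236; 424; 582]; [:: 152; 215; 279; 582];
  [:: 0; 318; 408; 585]; [:: 19; 271; 394; 585]; [:: 38; 113; 311; 585]; [:: 57; 356; 452; 585];
  [:: 76; 208; 295; 585]; [:: 114; 225; 384; 585]; [:: 133; 239; 412; 585]; [:: 152; 203; 234; 585];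
  [:: 57; 366; 447; 588]; [:: 43; 76; 337; 588]; [:: 95; 134; 392; 588]; [:: 5; 114; 422; 588];
  [:: 133; 229; 370; 588]; [:: 15; 171; 231; 588]; [:: 190; 293; 424; 588]; [:: 209; 272; 336; 588];
  [:: 57; 375; 408; 591]; [:: 52; 76; 328; 591]; [:: 95; 170; 368; 591]; [:: 14; 114; 452; 591];
  [:: 133; 265; 352; 591]; [:: 42; 171; 282; 591]; [:: 190; 296; 412; 591]; [:: 209; 260; 291; 591];
  [:: 24; 114; 447; 594]; [:: 100; 133; 394; 594]; [:: 50; 152; 191; 594]; [:: 62; 171; 422; 594];
  [:: 28; 190; 286; 594]; [:: 72; 228; 288; 594]; [:: 247; 350; 424; 594]; [:: 266; 329; 393; 594];
  [:: 33; 114; 408; 597]; [:: 109; 133; 385; 597]; [:: 26; 152; 227; 597]; [:: 71; 171; 452; 597];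
  [:: 10; 190; 322; 597]; [:: 99; 228; 339; 597]; [:: 247; 353; 412; 597]; [:: 266; 317; 348; 597];
  [:: 81; 171; 447; 600]; [:: 52; 157; 190; 600]; [:: 107; 209; 248; 600]; [:: 119; 228; 422; 600];
  [:: 85; 247; 343; 600]; [:: 129; 285; 345; 600]; [:: 8; 304; 424; 600]; [:: 51; 323; 386; 600];
  [:: 90; 171; 408; 603]; [:: 43; 166; 190; 603]; [:: 83; 209; 284; 603]; [:: 128; 228; 452; 603];
  [:: 67; 247; 379; 603]; [:: 156; 285; 396; 603]; [:: 11; 304; 412; 603]; [:: 6; 323; 374; 603];
  [:: 138; 228; 447; 606]; [:: 109; 214; 247; 606]; [:: 164; 266; 305; 606]; [:: 176; 285; 422; 606];
  [:: 1; 142; 304; 606]; [:: 3; 186; 342; 606]; [:: 65; 361; 424; 606]; [:: 44; 108; 380; 606];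
  [:: 147; 228; 408; 609]; [:: 100; 223; 247; 609]; [:: 140; 266; 341; 609]; [:: 185; 285; 452; 609];
  [:: 37; 124; 304; 609]; [:: 54; 213; 342; 609]; [:: 68; 361; 412; 609]; [:: 32; 63; 380; 609];
  [:: 195; 285; 447; 612]; [:: 166; 271; 304; 612]; [:: 221; 323; 362; 612]; [:: 233; 342; 422; 612];
  [:: 58; 199; 361; 612]; [:: 0; 60; 243; 612]; [:: 19; 122; 424; 612]; [:: 38; 101; 165; 612];
  [:: 204; 285; 408; 615]; [:: 157; 280; 304; 615]; [:: 197; 323; 398; 615]; [:: 242; 342; 452; 615];
  [:: 94; 181; 361; 615]; [:: 0; 111; 270; 615]; [:: 19; 125; 412; 615]; [:: 38; 89; 120; 615];
  [:: 252; 342; 447; 618]; [:: 223; 328; 361; 618]; [:: 20; 278; 380; 618]; [:: 0; 290; 422; 618];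
  [:: 19; 115; 256; 618]; [:: 57; 117; 300; 618]; [:: 76; 179; 424; 618]; [:: 95; 158; 222; 618];
  [:: 261; 342; 408; 621]; [:: 214; 337; 361; 621]; [:: 56; 254; 380; 621]; [:: 0; 299; 452; 621];
  [:: 19; 151; 238; 621]; [:: 57; 168; 327; 621]; [:: 76; 182; 412; 621]; [:: 95; 146; 177; 621];
  [:: 114; 266; 342; 624]; [:: 133; 209; 247; 624]; [:: 57; 152; 304; 624]; [:: 0; 285; 437; 624];
  [:: 38; 190; 399; 624]; [:: 76; 171; 361; 624]; [:: 19; 380; 418; 624]; [:: 95; 228; 323; 624];
  [:: 0; 152; 342; 627]; [:: 133; 266; 418; 627]; [:: 114; 209; 437; 627]; [:: 57; 380; 399; 627];
  [:: 38; 76; 228; 627]; [:: 190; 285; 361; 627]; [:: 19; 247; 323; 627]; [:: 95; 171; 304; 627];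
  [:: 0; 133; 323; 630]; [:: 114; 285; 380; 630]; [:: 76; 152; 399; 630]; [:: 190; 304; 437; 630];
  [:: 209; 266; 361; 630]; [:: 57; 228; 418; 630]; [:: 19; 95; 342; 630]; [:: 38; 171; 247; 630];
  [:: 114; 179; 370; 443]; [:: 114; 182; 352; 431]; [:: 28; 171; 236; 443]; [:: 10; 171; 239; 431];
  [:: 85; 228; 293; 443]; [:: 67; 228; 296; 431]; [:: 142; 285; 350; 443]; [:: 124; 285; 353; 431];
  [:: 8; 199; 342; 443]; [:: 11; 181; 342; 431]; [:: 0; 65; 256; 443]; [:: 0; 68; 238; 431];
  [:: 57; 122; 313; 443]; [:: 57; 125; 295; 431]; [:: 0; 115; 212; 377]; [:: 0; 151; 206; 383];
  [:: 35; 57; 172; 269]; [:: 41; 57; 208; 263]; [:: 92; 114; 229; 326]; [:: 98; 114; 265; 320];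
  [:: 149; 171; 286; 383]; [:: 155; 171; 322; 377]; [:: 41; 206; 228; 343]; [:: 35; 212; 228; 379];
  [:: 1; 98; 263; 285]; [:: 37; 92; 269; 285]; [:: 58; 155; 320; 342]; [:: 94; 149; 326; 342];
  [:: 0; 57; 114; 171]; [:: 228; 285; 342; 399]].

Definition bb60 : seq (seq nat) := [::
  [:: 0; 99; 159; 456]; [:: 19; 80; 154; 456]; [:: 38; 173; 309; 456]; [:: 76; 268; 332; 456];
  [:: 152; 289; 447; 456]; [:: 171; 346; 433; 456]; [:: 190; 267; 347; 456]; [:: 266; 381; 440; 456];
  [:: 0; 66; 144; 459]; [:: 19; 104; 166; 459]; [:: 38; 185; 339; 459]; [:: 76; 280; 329; 459];
  [:: 152; 313; 450; 459]; [:: 171; 370; 409; 459]; [:: 190; 273; 377; 459]; [:: 266; 387; 401; 459];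
  [:: 0; 105; 141; 462]; [:: 19; 86; 157; 462]; [:: 38; 176; 288; 462]; [:: 76; 271; 317; 462];
  [:: 152; 295; 405; 462]; [:: 171; 352; 427; 462]; [:: 190; 240; 383; 462]; [:: 266; 354; 416; 462];
  [:: 0; 72; 126; 465]; [:: 19; 110; 169; 465]; [:: 38; 188; 318; 465]; [:: 76; 283; 314; 465];
  [:: 152; 319; 408; 465]; [:: 171; 376; 403; 465]; [:: 190; 246; 356; 465]; [:: 266; 360; 434; 465];
  [:: 0; 108; 132; 468]; [:: 19; 89; 130; 468]; [:: 38; 206; 306; 468]; [:: 76; 244; 338; 468];
  [:: 152; 298; 441; 468]; [:: 171; 355; 424; 468]; [:: 190; 255; 344; 468]; [:: 266; 369; 404; 468];
  [:: 0; 63; 153; 471]; [:: 19; 101; 136; 471]; [:: 38; 212; 321; 471]; [:: 76; 250; 308; 471];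
  [:: 152; 310; 414; 471]; [:: 171; 367; 412; 471]; [:: 190; 258; 359; 471]; [:: 266; 372; 413; 471];
  [:: 57; 153; 216; 474]; [:: 76; 116; 199; 474]; [:: 95; 248; 366; 474]; [:: 133; 289; 368; 474];
  [:: 209; 346; 429; 474]; [:: 19; 270; 439; 474]; [:: 38; 229; 333; 474]; [:: 0; 287; 419; 474];
  [:: 57; 159; 201; 477]; [:: 76; 128; 196; 477]; [:: 95; 254; 396; 477]; [:: 133; 313; 353; 477];
  [:: 209; 370; 438; 477]; [:: 19; 237; 451; 477]; [:: 38; 235; 336; 477]; [:: 0; 299; 425; 477];
  [:: 57; 126; 198; 480]; [:: 76; 119; 184; 480]; [:: 95; 278; 345; 480]; [:: 133; 295; 350; 480];
  [:: 209; 352; 417; 480]; [:: 19; 276; 442; 480]; [:: 38; 259; 291; 480]; [:: 0; 290; 449; 480];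
  [:: 57; 132; 183; 483]; [:: 76; 131; 181; 483]; [:: 95; 284; 375; 483]; [:: 133; 319; 392; 483];
  [:: 209; 376; 426; 483]; [:: 19; 243; 454; 483]; [:: 38; 265; 294; 483]; [:: 0; 302; 455; 483];
  [:: 57; 141; 189; 486]; [:: 76; 149; 205; 486]; [:: 95; 236; 363; 486]; [:: 133; 298; 398; 486];
  [:: 209; 355; 411; 486]; [:: 19; 279; 415; 486]; [:: 38; 274; 327; 486]; [:: 0; 320; 407; 486];
  [:: 57; 144; 210; 489]; [:: 76; 155; 175; 489]; [:: 95; 239; 378; 489]; [:: 133; 310; 362; 489];
  [:: 209; 367; 444; 489]; [:: 19; 234; 421; 489]; [:: 38; 277; 300; 489]; [:: 0; 326; 410; 489];
  [:: 114; 210; 231; 492]; [:: 133; 194; 253; 492]; [:: 0; 137; 311; 492]; [:: 38; 172; 349; 492];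
  [:: 19; 248; 408; 492]; [:: 76; 327; 448; 492]; [:: 95; 325; 384; 492]; [:: 57; 362; 455; 492];
  [:: 114; 216; 249; 495]; [:: 133; 218; 232; 495]; [:: 0; 161; 296; 495]; [:: 38; 178; 391; 495];
  [:: 19; 254; 405; 495]; [:: 76; 294; 400; 495]; [:: 95; 337; 351; 495]; [:: 57; 368; 449; 495];
  [:: 114; 183; 264; 498]; [:: 133; 200; 262; 498]; [:: 0; 143; 293; 498]; [:: 38; 202; 388; 498];
  [:: 19; 278; 450; 498]; [:: 76; 333; 436; 498]; [:: 95; 328; 390; 498]; [:: 57; 392; 425; 498];
  [:: 114; 189; 282; 501]; [:: 133; 224; 241; 501]; [:: 0; 167; 335; 501]; [:: 38; 208; 373; 501];
  [:: 19; 284; 447; 501]; [:: 76; 300; 445; 501]; [:: 95; 340; 357; 501]; [:: 57; 398; 419; 501];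
  [:: 114; 198; 252; 504]; [:: 133; 203; 238; 504]; [:: 0; 146; 341; 504]; [:: 38; 217; 379; 504];
  [:: 19; 236; 414; 504]; [:: 76; 336; 430; 504]; [:: 95; 301; 393; 504]; [:: 57; 350; 410; 504];
  [:: 114; 201; 261; 507]; [:: 133; 215; 256; 507]; [:: 0; 158; 305; 507]; [:: 38; 220; 343; 507];
  [:: 19; 239; 441; 507]; [:: 76; 291; 406; 507]; [:: 95; 307; 348; 507]; [:: 57; 353; 407; 507];
  [:: 171; 267; 312; 510]; [:: 190; 251; 310; 510]; [:: 57; 191; 365; 510]; [:: 19; 59; 232; 510];
  [:: 76; 287; 435; 510]; [:: 133; 381; 403; 510]; [:: 0; 116; 397; 510]; [:: 38; 135; 443; 510];
  [:: 171; 273; 303; 513]; [:: 190; 275; 289; 513]; [:: 57; 197; 389; 513]; [:: 19; 71; 256; 513];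
  [:: 76; 299; 423; 513]; [:: 133; 387; 427; 513]; [:: 0; 128; 385; 513]; [:: 38; 147; 422; 513];
  [:: 171; 240; 324; 516]; [:: 190; 257; 319; 516]; [:: 57; 221; 371; 516]; [:: 19; 62; 238; 516];
  [:: 76; 290; 432; 516]; [:: 133; 354; 409; 516]; [:: 0; 119; 394; 516]; [:: 38; 138; 452; 516];
  [:: 171; 246; 315; 519]; [:: 190; 281; 298; 519]; [:: 57; 227; 395; 519]; [:: 19; 74; 262; 519];
  [:: 76; 302; 420; 519]; [:: 133; 360; 433; 519]; [:: 0; 131; 382; 519]; [:: 38; 150; 431; 519];
  [:: 171; 255; 330; 522]; [:: 190; 260; 295; 522]; [:: 57; 179; 374; 522]; [:: 19; 92; 241; 522];
  [:: 76; 320; 402; 522]; [:: 133; 369; 412; 522]; [:: 0; 149; 364; 522]; [:: 38; 168; 428; 522];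
  [:: 171; 258; 297; 525]; [:: 190; 272; 313; 525]; [:: 57; 182; 386; 525]; [:: 19; 98; 253; 525];
  [:: 76; 326; 453; 525]; [:: 133; 372; 424; 525]; [:: 0; 155; 358; 525]; [:: 38; 117; 446; 525];
  [:: 228; 327; 348; 528]; [:: 247; 308; 391; 528]; [:: 38; 156; 233; 528]; [:: 76; 134; 322; 528];
  [:: 133; 344; 402; 528]; [:: 0; 172; 442; 528]; [:: 19; 99; 185; 528]; [:: 95; 213; 452; 528];
  [:: 228; 294; 384; 531]; [:: 247; 332; 343; 531]; [:: 38; 123; 263; 531]; [:: 76; 140; 316; 531];
  [:: 133; 356; 420; 531]; [:: 0; 178; 415; 531]; [:: 19; 66; 212; 531]; [:: 95; 180; 428; 531];
  [:: 228; 333; 357; 534]; [:: 247; 314; 379; 534]; [:: 38; 162; 269; 534]; [:: 76; 164; 292; 534];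
  [:: 133; 347; 435; 534]; [:: 0; 202; 421; 534]; [:: 19; 105; 206; 534]; [:: 95; 219; 446; 534];
  [:: 228; 300; 393; 537]; [:: 247; 338; 388; 537]; [:: 38; 129; 242; 537]; [:: 76; 170; 286; 537];
  [:: 133; 359; 453; 537]; [:: 0; 208; 451; 537]; [:: 19; 72; 176; 537]; [:: 95; 186; 422; 537];
  [:: 228; 336; 390; 540]; [:: 247; 317; 373; 540]; [:: 38; 165; 230; 540]; [:: 76; 122; 334; 540];
  [:: 133; 377; 423; 540]; [:: 0; 217; 439; 540]; [:: 19; 108; 188; 540]; [:: 95; 222; 443; 540];
  [:: 228; 291; 351; 543]; [:: 247; 329; 349; 543]; [:: 38; 120; 245; 543]; [:: 76; 125; 331; 543];
  [:: 133; 383; 432; 543]; [:: 0; 220; 454; 543]; [:: 19; 63; 173; 543]; [:: 95; 177; 431; 543];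
  [:: 0; 306; 345; 546]; [:: 19; 289; 395; 546]; [:: 95; 210; 314; 546]; [:: 133; 191; 388; 546];
  [:: 38; 175; 426; 546]; [:: 57; 232; 409; 546]; [:: 76; 156; 230; 546]; [:: 152; 249; 425; 546];
  [:: 0; 318; 363; 549]; [:: 19; 313; 371; 549]; [:: 95; 216; 317; 549]; [:: 133; 197; 379; 549];
  [:: 38; 199; 417; 549]; [:: 57; 256; 412; 549]; [:: 76; 123; 242; 549]; [:: 152; 261; 410; 549];
  [:: 0; 309; 378; 552]; [:: 19; 295; 389; 552]; [:: 95; 183; 329; 552]; [:: 133; 221; 343; 552];
  [:: 38; 181; 438; 552]; [:: 57; 238; 424; 552]; [:: 76; 162; 233; 552]; [:: 152; 252; 407; 552];
  [:: 0; 321; 396; 555]; [:: 19; 319; 365; 555]; [:: 95; 189; 332; 555]; [:: 133; 227; 391; 555];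
  [:: 38; 205; 429; 555]; [:: 57; 262; 427; 555]; [:: 76; 129; 245; 555]; [:: 152; 264; 449; 555];
  [:: 0; 339; 366; 558]; [:: 19; 298; 386; 558]; [:: 95; 198; 308; 558]; [:: 133; 179; 349; 558];
  [:: 38; 184; 444; 558]; [:: 57; 241; 403; 558]; [:: 76; 165; 263; 558]; [:: 152; 282; 455; 558];
  [:: 0; 288; 375; 561]; [:: 19; 310; 374; 561]; [:: 95; 201; 338; 561]; [:: 133; 182; 373; 561];
  [:: 38; 196; 411; 561]; [:: 57; 253; 433; 561]; [:: 76; 120; 269; 561]; [:: 152; 231; 419; 561];
  [:: 0; 96; 387; 564]; [:: 38; 97; 364; 564]; [:: 152; 270; 395; 564]; [:: 19; 172; 269; 564];
  [:: 95; 232; 423; 564]; [:: 114; 286; 442; 564]; [:: 133; 213; 329; 564]; [:: 209; 327; 401; 564];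
  [:: 0; 102; 372; 567]; [:: 38; 109; 382; 567]; [:: 152; 237; 371; 567]; [:: 19; 178; 230; 567];
  [:: 95; 256; 453; 567]; [:: 114; 292; 415; 567]; [:: 133; 180; 308; 567]; [:: 209; 294; 413; 567];
  [:: 0; 69; 369; 570]; [:: 38; 100; 397; 570]; [:: 152; 276; 389; 570]; [:: 19; 202; 245; 570];
  [:: 95; 238; 402; 570]; [:: 114; 316; 421; 570]; [:: 133; 219; 338; 570]; [:: 209; 333; 404; 570];
  [:: 0; 75; 354; 573]; [:: 38; 112; 358; 573]; [:: 152; 243; 365; 573]; [:: 19; 208; 263; 573];
  [:: 95; 262; 432; 573]; [:: 114; 322; 451; 573]; [:: 133; 186; 317; 573]; [:: 209; 300; 416; 573];
  [:: 0; 84; 360; 576]; [:: 38; 73; 385; 576]; [:: 152; 279; 386; 576]; [:: 19; 217; 233; 576];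
  [:: 95; 241; 420; 576]; [:: 114; 331; 439; 576]; [:: 133; 222; 314; 576]; [:: 209; 336; 434; 576];
  [:: 0; 87; 381; 579]; [:: 38; 79; 394; 579]; [:: 152; 234; 374; 579]; [:: 19; 220; 242; 579];
  [:: 95; 253; 435; 579]; [:: 114; 334; 454; 579]; [:: 133; 177; 332; 579]; [:: 209; 291; 440; 579];
  [:: 114; 251; 363; 582]; [:: 133; 173; 274; 582]; [:: 57; 134; 331; 582]; [:: 0; 324; 401; 582];
  [:: 38; 211; 441; 582]; [:: 76; 192; 364; 582]; [:: 19; 362; 406; 582]; [:: 95; 267; 287; 582];
  [:: 114; 275; 375; 585]; [:: 133; 185; 265; 585]; [:: 57; 140; 322; 585]; [:: 0; 330; 413; 585];
  [:: 38; 223; 408; 585]; [:: 76; 204; 382; 585]; [:: 19; 368; 448; 585]; [:: 95; 273; 299; 585];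
  [:: 114; 257; 366; 588]; [:: 133; 176; 229; 588]; [:: 57; 164; 286; 588]; [:: 0; 297; 404; 588];
  [:: 38; 214; 447; 588]; [:: 76; 195; 397; 588]; [:: 19; 392; 445; 588]; [:: 95; 240; 290; 588];
  [:: 114; 281; 378; 591]; [:: 133; 188; 277; 591]; [:: 57; 170; 334; 591]; [:: 0; 303; 416; 591];
  [:: 38; 226; 414; 591]; [:: 76; 207; 358; 591]; [:: 19; 398; 430; 591]; [:: 95; 246; 302; 591];
  [:: 114; 260; 396; 594]; [:: 133; 206; 235; 594]; [:: 57; 122; 292; 594]; [:: 0; 312; 434; 594];
  [:: 38; 187; 450; 594]; [:: 76; 225; 385; 594]; [:: 19; 350; 436; 594]; [:: 95; 255; 320; 594];
  [:: 114; 272; 345; 597]; [:: 133; 212; 259; 597]; [:: 57; 125; 316; 597]; [:: 0; 315; 440; 597];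
  [:: 38; 193; 405; 597]; [:: 76; 174; 394; 597]; [:: 19; 353; 400; 597]; [:: 95; 258; 326; 597];
  [:: 0; 134; 390; 600]; [:: 133; 248; 442; 600]; [:: 114; 173; 419; 600]; [:: 57; 344; 435; 600];
  [:: 38; 58; 237; 600]; [:: 190; 324; 349; 600]; [:: 19; 229; 341; 600]; [:: 95; 192; 286; 600];
  [:: 0; 140; 393; 603]; [:: 133; 254; 415; 603]; [:: 114; 185; 425; 603]; [:: 57; 356; 423; 603];
  [:: 38; 64; 234; 603]; [:: 190; 330; 391; 603]; [:: 19; 235; 335; 603]; [:: 95; 204; 292; 603];
  [:: 0; 164; 348; 606]; [:: 133; 278; 421; 606]; [:: 114; 176; 449; 606]; [:: 57; 347; 432; 606];
  [:: 38; 88; 279; 606]; [:: 190; 297; 388; 606]; [:: 19; 259; 311; 606]; [:: 95; 195; 316; 606];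
  [:: 0; 170; 351; 609]; [:: 133; 284; 451; 609]; [:: 114; 188; 455; 609]; [:: 57; 359; 420; 609];
  [:: 38; 94; 276; 609]; [:: 190; 303; 373; 609]; [:: 19; 265; 305; 609]; [:: 95; 207; 322; 609];
  [:: 0; 122; 384; 612]; [:: 133; 236; 439; 612]; [:: 114; 206; 407; 612]; [:: 57; 377; 402; 612];
  [:: 38; 103; 243; 612]; [:: 190; 312; 379; 612]; [:: 19; 274; 296; 612]; [:: 95; 225; 331; 612];
  [:: 0; 125; 357; 615]; [:: 133; 239; 454; 615]; [:: 114; 212; 410; 615]; [:: 57; 383; 453; 615];
  [:: 38; 106; 270; 615]; [:: 190; 315; 343; 615]; [:: 19; 277; 293; 615]; [:: 95; 174; 334; 615];
  [:: 0; 115; 308; 618]; [:: 114; 324; 347; 618]; [:: 76; 137; 414; 618]; [:: 190; 325; 404; 618];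
  [:: 209; 251; 382; 618]; [:: 57; 270; 445; 618]; [:: 19; 77; 351; 618]; [:: 38; 213; 271; 618];
  [:: 0; 121; 332; 621]; [:: 114; 330; 377; 621]; [:: 76; 161; 447; 621]; [:: 190; 337; 434; 621];
  [:: 209; 275; 394; 621]; [:: 57; 237; 436; 621]; [:: 19; 83; 348; 621]; [:: 38; 180; 244; 621];
  [:: 0; 145; 314; 624]; [:: 114; 297; 383; 624]; [:: 76; 143; 408; 624]; [:: 190; 328; 440; 624];
  [:: 209; 257; 385; 624]; [:: 57; 276; 400; 624]; [:: 19; 107; 393; 624]; [:: 38; 219; 250; 624];
  [:: 0; 151; 338; 627]; [:: 114; 303; 356; 627]; [:: 76; 167; 441; 627]; [:: 190; 340; 413; 627];
  [:: 209; 281; 397; 627]; [:: 57; 243; 448; 627]; [:: 19; 113; 390; 627]; [:: 38; 186; 280; 627];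
  [:: 0; 160; 317; 630]; [:: 114; 312; 344; 630]; [:: 76; 146; 405; 630]; [:: 190; 301; 401; 630];
  [:: 209; 260; 358; 630]; [:: 57; 279; 406; 630]; [:: 19; 65; 357; 630]; [:: 38; 222; 268; 630];
  [:: 0; 163; 329; 633]; [:: 114; 315; 359; 633]; [:: 76; 158; 450; 633]; [:: 190; 307; 416; 633];
  [:: 209; 272; 364; 633]; [:: 57; 234; 430; 633]; [:: 19; 68; 384; 633]; [:: 38; 177; 283; 633];
  [:: 0; 78; 120; 213]; [:: 0; 90; 156; 180]; [:: 0; 81; 129; 219]; [:: 0; 93; 165; 186];
  [:: 0; 111; 162; 222]; [:: 0; 60; 123; 177]; [:: 228; 306; 378; 444]; [:: 228; 318; 366; 429];
  [:: 228; 309; 375; 426]; [:: 228; 321; 363; 411]; [:: 228; 339; 345; 417]; [:: 228; 288; 396; 438];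
  [:: 57; 133; 209; 380]; [:: 0; 209; 361; 418]; [:: 0; 190; 266; 380]; [:: 57; 171; 266; 418];
  [:: 0; 114; 171; 304]; [:: 57; 190; 247; 285]; [:: 114; 209; 323; 437]; [:: 0; 76; 133; 247];
  [:: 0; 152; 228; 399]; [:: 228; 285; 380; 418]; [:: 114; 266; 285; 342]; [:: 0; 95; 285; 437];
  [:: 0; 57; 323; 342]; [:: 57; 152; 361; 437]].

Definition bb61 : seq (seq nat) := [::
  [:: 0; 99; 159; 456]; [:: 19; 80; 154; 456]; [:: 38; 173; 309; 456]; [:: 76; 268; 332; 456];
  [:: 152; 289; 447; 456]; [:: 171; 346; 433; 456]; [:: 190; 267; 347; 456]; [:: 266; 381; 440; 456];
  [:: 0; 66; 144; 459]; [:: 19; 104; 166; 459]; [:: 38; 185; 339; 459]; [:: 76; 280; 329; 459];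
  [:: 152; 313; 450; 459]; [:: 171; 370; 409; 459]; [:: 190; 273; 377; 459]; [:: 266; 387; 401; 459];
  [:: 0; 105; 141; 462]; [:: 19; 86; 157; 462]; [:: 38; 176; 288; 462]; [:: 76; 271; 317; 462];
  [:: 152; 295; 405; 462]; [:: 171; 352; 427; 462]; [:: 190; 240; 383; 462]; [:: 266; 354; 416; 462];
  [:: 0; 72; 126; 465]; [:: 19; 110; 169; 465]; [:: 38; 188; 318; 465]; [:: 76; 283; 314; 465];
  [:: 152; 319; 408; 465]; [:: 171; 376; 403; 465]; [:: 190; 246; 356; 465]; [:: 266; 360; 434; 465];
  [:: 0; 108; 132; 468]; [:: 19; 89; 130; 468]; [:: 38; 206; 306; 468]; [:: 76; 244; 338; 468];
  [:: 152; 298; 441; 468]; [:: 171; 355; 424; 468]; [:: 190; 255; 344; 468]; [:: 266; 369; 404; 468];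
  [:: 0; 63; 153; 471]; [:: 19; 101; 136; 471]; [:: 38; 212; 321; 471]; [:: 76; 250; 308; 471];
  [:: 152; 310; 414; 471]; [:: 171; 367; 412; 471]; [:: 190; 258; 359; 471]; [:: 266; 372; 413; 471];
  [:: 57; 153; 216; 474]; [:: 76; 116; 199; 474]; [:: 95; 248; 366; 474]; [:: 133; 289; 368; 474];
  [:: 209; 346; 429; 474]; [:: 19; 270; 439; 474]; [:: 38; 229; 333; 474]; [:: 0; 287; 419; 474];
  [:: 57; 159; 201; 477]; [:: 76; 128; 196; 477]; [:: 95; 254; 396; 477]; [:: 133; 313; 353; 477];
  [:: 209; 370; 438; 477]; [:: 19; 237; 451; 477]; [:: 38; 235; 336; 477]; [:: 0; 299; 425; 477];
  [:: 57; 126; 198; 480]; [:: 76; 119; 184; 480]; [:: 95; 278; 345; 480]; [:: 133; 295; 350; 480];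
  [:: 209; 352; 417; 480]; [:: 19; 276; 442; 480]; [:: 38; 259; 291; 480]; [:: 0; 290; 449; 480];
  [:: 57; 132; 183; 483]; [:: 76; 131; 181; 483]; [:: 95; 284; 375; 483]; [:: 133; 319; 392; 483];
  [:: 209; 376; 426; 483]; [:: 19; 243; 454; 483]; [:: 38; 265; 294; 483]; [:: 0; 302; 455; 483];
  [:: 57; 141; 189; 486]; [:: 76; 149; 205; 486]; [:: 95; 236; 363; 486]; [:: 133; 298; 398; 486];
  [:: 209; 355; 411; 486]; [:: 19; 279; 415; 486]; [:: 38; 274; 327; 486]; [:: 0; 320; 407; 486];
  [:: 57; 144; 210; 489]; [:: 76; 155; 175; 489]; [:: 95; 239; 378; 489]; [:: 133; 310; 362; 489];
  [:: 209; 367; 444; 489]; [:: 19; 234; 421; 489]; [:: 38; 277; 300; 489]; [:: 0; 326; 410; 489];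
  [:: 114; 210; 231; 492]; [:: 133; 194; 253; 492]; [:: 0; 137; 311; 492]; [:: 38; 172; 349; 492];
  [:: 19; 248; 408; 492]; [:: 76; 327; 448; 492]; [:: 95; 325; 384; 492]; [:: 57; 362; 455; 492];
  [:: 114; 216; 249; 495]; [:: 133; 218; 232; 495]; [:: 0; 161; 296; 495]; [:: 38; 178; 391; 495];
  [:: 19; 254; 405; 495]; [:: 76; 294; 400; 495]; [:: 95; 337; 351; 495]; [:: 57; 368; 449; 495];
  [:: 114; 183; 264; 498]; [:: 133; 200; 262; 498]; [:: 0; 143; 293; 498]; [:: 38; 202; 388; 498];
  [:: 19; 278; 450; 498]; [:: 76; 333; 436; 498]; [:: 95; 328; 390; 498]; [:: 57; 392; 425; 498];
  [:: 114; 189; 282; 501]; [:: 133; 224; 241; 501]; [:: 0; 167; 335; 501]; [:: 38; 208; 373; 501];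
  [:: 19; 284; 447; 501]; [:: 76; 300; 445; 501]; [:: 95; 340; 357; 501]; [:: 57; 398; 419; 501];
  [:: 114; 198; 252; 504]; [:: 133; 203; 238; 504]; [:: 0; 146; 341; 504]; [:: 38; 217; 379; 504];
  [:: 19; 236; 414; 504]; [:: 76; 336; 430; 504]; [:: 95; 301; 393; 504]; [:: 57; 350; 410; 504];
  [:: 114; 201; 261; 507]; [:: 133; 215; 256; 507]; [:: 0; 158; 305; 507]; [:: 38; 220; 343; 507];
  [:: 19; 239; 441; 507]; [:: 76; 291; 406; 507]; [:: 95; 307; 348; 507]; [:: 57; 353; 407; 507];
  [:: 171; 267; 312; 510]; [:: 190; 251; 310; 510]; [:: 57; 191; 365; 510]; [:: 19; 59; 232; 510];
  [:: 76; 287; 435; 510]; [:: 133; 381; 403; 510]; [:: 0; 116; 397; 510]; [:: 38; 135; 443; 510];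
  [:: 171; 273; 303; 513]; [:: 190; 275; 289; 513]; [:: 57; 197; 389; 513]; [:: 19; 71; 256; 513];
  [:: 76; 299; 423; 513]; [:: 133; 387; 427; 513]; [:: 0; 128; 385; 513]; [:: 38; 147; 422; 513];
  [:: 171; 240; 324; 516]; [:: 190; 257; 319; 516]; [:: 57; 221; 371; 516]; [:: 19; 62; 238; 516];
  [:: 76; 290; 432; 516]; [:: 133; 354; 409; 516]; [:: 0; 119; 394; 516]; [:: 38; 138; 452; 516];
  [:: 171; 246; 315; 519]; [:: 190; 281; 298; 519]; [:: 57; 227; 395; 519]; [:: 19; 74; 262; 519];
  [:: 76; 302; 420; 519]; [:: 133; 360; 433; 519]; [:: 0; 131; 382; 519]; [:: 38; 150; 431; 519];
  [:: 171; 255; 330; 522]; [:: 190; 260; 295; 522]; [:: 57; 179; 374; 522]; [:: 19; 92; 241; 522];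
  [:: 76; 320; 402; 522]; [:: 133; 369; 412; 522]; [:: 0; 149; 364; 522]; [:: 38; 168; 428; 522];
  [:: 171; 258; 297; 525]; [:: 190; 272; 313; 525]; [:: 57; 182; 386; 525]; [:: 19; 98; 253; 525];
  [:: 76; 326; 453; 525]; [:: 133; 372; 424; 525]; [:: 0; 155; 358; 525]; [:: 38; 117; 446; 525];
  [:: 228; 327; 348; 528]; [:: 247; 308; 391; 528]; [:: 38; 156; 233; 528]; [:: 76; 134; 322; 528];
  [:: 133; 344; 402; 528]; [:: 0; 172; 442; 528]; [:: 19; 99; 185; 528]; [:: 95; 213; 452; 528];
  [:: 228; 294; 384; 531]; [:: 247; 332; 343; 531]; [:: 38; 123; 263; 531]; [:: 76; 140; 316; 531];
  [:: 133; 356; 420; 531]; [:: 0; 178; 415; 531]; [:: 19; 66; 212; 531]; [:: 95; 180; 428; 531];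
  [:: 228; 333; 357; 534]; [:: 247; 314; 379; 534]; [:: 38; 162; 269; 534]; [:: 76; 164; 292; 534];
  [:: 133; 347; 435; 534]; [:: 0; 202; 421; 534]; [:: 19; 105; 206; 534]; [:: 95; 219; 446; 534];
  [:: 228; 300; 393; 537]; [:: 247; 338; 388; 537]; [:: 38; 129; 242; 537]; [:: 76; 170; 286; 537];
  [:: 133; 359; 453; 537]; [:: 0; 208; 451; 537]; [:: 19; 72; 176; 537]; [:: 95; 186; 422; 537];
  [:: 228; 336; 390; 540]; [:: 247; 317; 373; 540]; [:: 38; 165; 230; 540]; [:: 76; 122; 334; 540];
  [:: 133; 377; 423; 540]; [:: 0; 217; 439; 540]; [:: 19; 108; 188; 540]; [:: 95; 222; 443; 540];
  [:: 228; 291; 351; 543]; [:: 247; 329; 349; 543]; [:: 38; 120; 245; 543]; [:: 76; 125; 331; 543];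
  [:: 133; 383; 432; 543]; [:: 0; 220; 454; 543]; [:: 19; 63; 173; 543]; [:: 95; 177; 431; 543];
  [:: 0; 306; 345; 546]; [:: 19; 289; 395; 546]; [:: 95; 210; 314; 546]; [:: 133; 191; 388; 546];
  [:: 38; 175; 426; 546]; [:: 57; 232; 409; 546]; [:: 76; 156; 230; 546]; [:: 152; 249; 425; 546];
  [:: 0; 318; 363; 549]; [:: 19; 313; 371; 549]; [:: 95; 216; 317; 549]; [:: 133; 197; 379; 549];
  [:: 38; 199; 417; 549]; [:: 57; 256; 412; 549]; [:: 76; 123; 242; 549]; [:: 152; 261; 410; 549];
  [:: 0; 309; 378; 552]; [:: 19; 295; 389; 552]; [:: 95; 183; 329; 552]; [:: 133; 221; 343; 552];
  [:: 38; 181; 438; 552]; [:: 57; 238; 424; 552]; [:: 76; 162; 233; 552]; [:: 152; 252; 407; 552];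
  [:: 0; 321; 396; 555]; [:: 19; 319; 365; 555]; [:: 95; 189; 332; 555]; [:: 133; 227; 391; 555];
  [:: 38; 205; 429; 555]; [:: 57; 262; 427; 555]; [:: 76; 129; 245; 555]; [:: 152; 264; 449; 555];
  [:: 0; 339; 366; 558]; [:: 19; 298; 386; 558]; [:: 95; 198; 308; 558]; [:: 133; 179; 349; 558];
  [:: 38; 184; 444; 558]; [:: 57; 241; 403; 558]; [:: 76; 165; 263; 558]; [:: 152; 282; 455; 558];
  [:: 0; 288; 375; 561]; [:: 19; 310; 374; 561]; [:: 95; 201; 338; 561]; [:: 133; 182; 373; 561];
  [:: 38; 196; 411; 561]; [:: 57; 253; 433; 561]; [:: 76; 120; 269; 561]; [:: 152; 231; 419; 561];
  [:: 0; 96; 387; 564]; [:: 38; 97; 364; 564]; [:: 152; 270; 395; 564]; [:: 19; 172; 269; 564];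
  [:: 95; 232; 423; 564]; [:: 114; 286; 442; 564]; [:: 133; 213; 329; 564]; [:: 209; 327; 401; 564];
  [:: 0; 102; 372; 567]; [:: 38; 109; 382; 567]; [:: 152; 237; 371; 567]; [:: 19; 178; 230; 567];
  [:: 95; 256; 453; 567]; [:: 114; 292; 415; 567]; [:: 133; 180; 308; 567]; [:: 209; 294; 413; 567];
  [:: 0; 69; 369; 570]; [:: 38; 100; 397; 570]; [:: 152; 276; 389; 570]; [:: 19; 202; 245; 570];
  [:: 95; 238; 402; 570]; [:: 114; 316; 421; 570]; [:: 133; 219; 338; 570]; [:: 209; 333; 404; 570];
  [:: 0; 75; 354; 573]; [:: 38; 112; 358; 573]; [:: 152; 243; 365; 573]; [:: 19; 208; 263; 573];
  [:: 95; 262; 432; 573]; [:: 114; 322; 451; 573]; [:: 133; 186; 317; 573]; [:: 209; 300; 416; 573];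
  [:: 0; 84; 360; 576]; [:: 38; 73; 385; 576]; [:: 152; 279; 386; 576]; [:: 19; 217; 233; 576];
  [:: 95; 241; 420; 576]; [:: 114; 331; 439; 576]; [:: 133; 222; 314; 576]; [:: 209; 336; 434; 576];
  [:: 0; 87; 381; 579]; [:: 38; 79; 394; 579]; [:: 152; 234; 374; 579]; [:: 19; 220; 242; 579];
  [:: 95; 253; 435; 579]; [:: 114; 334; 454; 579]; [:: 133; 177; 332; 579]; [:: 209; 291; 440; 579];
  [:: 114; 251; 363; 582]; [:: 133; 173; 274; 582]; [:: 57; 134; 331; 582]; [:: 0; 324; 401; 582];
  [:: 38; 211; 441; 582]; [:: 76; 192; 364; 582]; [:: 19; 362; 406; 582]; [:: 95; 267; 287; 582];
  [:: 114; 275; 375; 585]; [:: 133; 185; 265; 585]; [:: 57; 140; 322; 585]; [:: 0; 330; 413; 585];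
  [:: 38; 223; 408; 585]; [:: 76; 204; 382; 585]; [:: 19; 368; 448; 585]; [:: 95; 273; 299; 585];
  [:: 114; 257; 366; 588]; [:: 133; 176; 229; 588]; [:: 57; 164; 286; 588]; [:: 0; 297; 404; 588];
  [:: 38; 214; 447; 588]; [:: 76; 195; 397; 588]; [:: 19; 392; 445; 588]; [:: 95; 240; 290; 588];
  [:: 114; 281; 378; 591]; [:: 133; 188; 277; 591]; [:: 57; 170; 334; 591]; [:: 0; 303; 416; 591];
  [:: 38; 226; 414; 591]; [:: 76; 207; 358; 591]; [:: 19; 398; 430; 591]; [:: 95; 246; 302; 591];
  [:: 114; 260; 396; 594]; [:: 133; 206; 235; 594]; [:: 57; 122; 292; 594]; [:: 0; 312; 434; 594];
  [:: 38; 187; 450; 594]; [:: 76; 225; 385; 594]; [:: 19; 350; 436; 594]; [:: 95; 255; 320; 594];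
  [:: 114; 272; 345; 597]; [:: 133; 212; 259; 597]; [:: 57; 125; 316; 597]; [:: 0; 315; 440; 597];
  [:: 38; 193; 405; 597]; [:: 76; 174; 394; 597]; [:: 19; 353; 400; 597]; [:: 95; 258; 326; 597];
  [:: 0; 134; 390; 600]; [:: 133; 248; 442; 600]; [:: 114; 173; 419; 600]; [:: 57; 344; 435; 600];
  [:: 38; 58; 237; 600]; [:: 190; 324; 349; 600]; [:: 19; 229; 341; 600]; [:: 95; 192; 286; 600];
  [:: 0; 140; 393; 603]; [:: 133; 254; 415; 603]; [:: 114; 185; 425; 603]; [:: 57; 356; 423; 603];
  [:: 38; 64; 234; 603]; [:: 190; 330; 391; 603]; [:: 19; 235; 335; 603]; [:: 95; 204; 292; 603];
  [:: 0; 164; 348; 606]; [:: 133; 278; 421; 606]; [:: 114; 176; 449; 606]; [:: 57; 347; 432; 606];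
  [:: 38; 88; 279; 606]; [:: 190; 297; 388; 606]; [:: 19; 259; 311; 606]; [:: 95; 195; 316; 606];
  [:: 0; 170; 351; 609]; [:: 133; 284; 451; 609]; [:: 114; 188; 455; 609]; [:: 57; 359; 420; 609];
  [:: 38; 94; 276; 609]; [:: 190; 303; 373; 609]; [:: 19; 265; 305; 609]; [:: 95; 207; 322; 609];
  [:: 0; 122; 384; 612]; [:: 133; 236; 439; 612]; [:: 114; 206; 407; 612]; [:: 57; 377; 402; 612];
  [:: 38; 103; 243; 612]; [:: 190; 312; 379; 612]; [:: 19; 274; 296; 612]; [:: 95; 225; 331; 612];
  [:: 0; 125; 357; 615]; [:: 133; 239; 454; 615]; [:: 114; 212; 410; 615]; [:: 57; 383; 453; 615];
  [:: 38; 106; 270; 615]; [:: 190; 315; 343; 615]; [:: 19; 277; 293; 615]; [:: 95; 174; 334; 615];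
  [:: 0; 115; 308; 618]; [:: 114; 324; 347; 618]; [:: 76; 137; 414; 618]; [:: 190; 325; 404; 618];
  [:: 209; 251; 382; 618]; [:: 57; 270; 445; 618]; [:: 19; 77; 351; 618]; [:: 38; 213; 271; 618];
  [:: 0; 121; 332; 621]; [:: 114; 330; 377; 621]; [:: 76; 161; 447; 621]; [:: 190; 337; 434; 621];
  [:: 209; 275; 394; 621]; [:: 57; 237; 436; 621]; [:: 19; 83; 348; 621]; [:: 38; 180; 244; 621];
  [:: 0; 145; 314; 624]; [:: 114; 297; 383; 624]; [:: 76; 143; 408; 624]; [:: 190; 328; 440; 624];
  [:: 209; 257; 385; 624]; [:: 57; 276; 400; 624]; [:: 19; 107; 393; 624]; [:: 38; 219; 250; 624];
  [:: 0; 151; 338; 627]; [:: 114; 303; 356; 627]; [:: 76; 167; 441; 627]; [:: 190; 340; 413; 627];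
  [:: 209; 281; 397; 627]; [:: 57; 243; 448; 627]; [:: 19; 113; 390; 627]; [:: 38; 186; 280; 627];
  [:: 0; 160; 317; 630]; [:: 114; 312; 344; 630]; [:: 76; 146; 405; 630]; [:: 190; 301; 401; 630];
  [:: 209; 260; 358; 630]; [:: 57; 279; 406; 630]; [:: 19; 65; 357; 630]; [:: 38; 222; 268; 630];
  [:: 0; 163; 329; 633]; [:: 114; 315; 359; 633]; [:: 76; 158; 450; 633]; [:: 190; 307; 416; 633];
  [:: 209; 272; 364; 633]; [:: 57; 234; 430; 633]; [:: 19; 68; 384; 633]; [:: 38; 177; 283; 633];
  [:: 95; 152; 304; 636]; [:: 76; 323; 342; 636]; [:: 57; 190; 437; 636]; [:: 247; 285; 399; 636];
  [:: 0; 209; 361; 636]; [:: 133; 228; 380; 636]; [:: 38; 171; 266; 636]; [:: 19; 114; 418; 636];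
  [:: 0; 78; 120; 213]; [:: 0; 90; 156; 180]; [:: 0; 81; 129; 219]; [:: 0; 93; 165; 186];
  [:: 0; 111; 162; 222]; [:: 0; 60; 123; 177]; [:: 228; 306; 378; 444]; [:: 228; 318; 366; 429];
  [:: 228; 309; 375; 426]; [:: 228; 321; 363; 411]; [:: 228; 339; 345; 417]; [:: 228; 288; 396; 438];
  [:: 0; 76; 266; 437]; [:: 57; 266; 342; 399]; [:: 0; 57; 171; 285]; [:: 57; 152; 209; 228];
  [:: 0; 95; 114; 342]; [:: 0; 133; 247; 304]; [:: 171; 228; 304; 342]; [:: 0; 323; 380; 418];
  [:: 114; 209; 304; 437]; [:: 114; 190; 380; 399]].

Definition bb62 : seq (seq nat) := [::
  [:: 0; 99; 159; 456]; [:: 19; 80; 154; 456]; [:: 38; 173; 309; 456]; [:: 76; 268; 332; 456];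
  [:: 152; 289; 447; 456]; [:: 171; 346; 433; 456]; [:: 190; 267; 347; 456]; [:: 266; 381; 440; 456];
  [:: 0; 66; 144; 459]; [:: 19; 104; 166; 459]; [:: 38; 185; 339; 459]; [:: 76; 280; 329; 459];
  [:: 152; 313; 450; 459]; [:: 171; 370; 409; 459]; [:: 190; 273; 377; 459]; [:: 266; 387; 401; 459];
  [:: 0; 105; 141; 462]; [:: 19; 86; 157; 462]; [:: 38; 176; 288; 462]; [:: 76; 271; 317; 462];
  [:: 152; 295; 405; 462]; [:: 171; 352; 427; 462]; [:: 190; 240; 383; 462]; [:: 266; 354; 416; 462];
  [:: 0; 72; 126; 465]; [:: 19; 110; 169; 465]; [:: 38; 188; 318; 465]; [:: 76; 283; 314; 465];
  [:: 152; 319; 408; 465]; [:: 171; 376; 403; 465]; [:: 190; 246; 356; 465]; [:: 266; 360; 434; 465];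
  [:: 0; 108; 132; 468]; [:: 19; 89; 130; 468]; [:: 38; 206; 306; 468]; [:: 76; 244; 338; 468];
  [:: 152; 298; 441; 468]; [:: 171; 355; 424; 468]; [:: 190; 255; 344; 468]; [:: 266; 369; 404; 468];
  [:: 0; 63; 153; 471]; [:: 19; 101; 136; 471]; [:: 38; 212; 321; 471]; [:: 76; 250; 308; 471];
  [:: 152; 310; 414; 471]; [:: 171; 367; 412; 471]; [:: 190; 258; 359; 471]; [:: 266; 372; 413; 471];
  [:: 57; 153; 216; 474]; [:: 76; 116; 199; 474]; [:: 95; 248; 366; 474]; [:: 133; 289; 368; 474];
  [:: 209; 346; 429; 474]; [:: 19; 270; 439; 474]; [:: 38; 229; 333; 474]; [:: 0; 287; 419; 474];
  [:: 57; 159; 201; 477]; [:: 76; 128; 196; 477]; [:: 95; 254; 396; 477]; [:: 133; 313; 353; 477];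
  [:: 209; 370; 438; 477]; [:: 19; 237; 451; 477]; [:: 38; 235; 336; 477]; [:: 0; 299; 425; 477];
  [:: 57; 126; 198; 480]; [:: 76; 119; 184; 480]; [:: 95; 278; 345; 480]; [:: 133; 295; 350; 480];
  [:: 209; 352; 417; 480]; [:: 19; 276; 442; 480]; [:: 38; 259; 291; 480]; [:: 0; 290; 449; 480];
  [:: 57; 132; 183; 483]; [:: 76; 131; 181; 483]; [:: 95; 284; 375; 483]; [:: 133; 319; 392; 483];
  [:: 209; 376; 426; 483]; [:: 19; 243; 454; 483]; [:: 38; 265; 294; 483]; [:: 0; 302; 455; 483];
  [:: 57; 141; 189; 486]; [:: 76; 149; 205; 486]; [:: 95; 236; 363; 486]; [:: 133; 298; 398; 486];
  [:: 209; 355; 411; 486]; [:: 19; 279; 415; 486]; [:: 38; 274; 327; 486]; [:: 0; 320; 407; 486];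
  [:: 57; 144; 210; 489]; [:: 76; 155; 175; 489]; [:: 95; 239; 378; 489]; [:: 133; 310; 362; 489];
  [:: 209; 367; 444; 489]; [:: 19; 234; 421; 489]; [:: 38; 277; 300; 489]; [:: 0; 326; 410; 489];
  [:: 114; 210; 231; 492]; [:: 133; 194; 253; 492]; [:: 0; 137; 311; 492]; [:: 38; 172; 349; 492];
  [:: 19; 248; 408; 492]; [:: 76; 327; 448; 492]; [:: 95; 325; 384; 492]; [:: 57; 362; 455; 492];
  [:: 114; 216; 249; 495]; [:: 133; 218; 232; 495]; [:: 0; 161; 296; 495]; [:: 38; 178; 391; 495];
  [:: 19; 254; 405; 495]; [:: 76; 294; 400; 495]; [:: 95; 337; 351; 495]; [:: 57; 368; 449; 495];
  [:: 114; 183; 264; 498]; [:: 133; 200; 262; 498]; [:: 0; 143; 293; 498]; [:: 38; 202; 388; 498];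
  [:: 19; 278; 450; 498]; [:: 76; 333; 436; 498]; [:: 95; 328; 390; 498]; [:: 57; 392; 425; 498];
  [:: 114; 189; 282; 501]; [:: 133; 224; 241; 501]; [:: 0; 167; 335; 501]; [:: 38; 208; 373; 501];
  [:: 19; 284; 447; 501]; [:: 76; 300; 445; 501]; [:: 95; 340; 357; 501]; [:: 57; 398; 419; 501];
  [:: 114; 198; 252; 504]; [:: 133; 203; 238; 504]; [:: 0; 146; 341; 504]; [:: 38; 217; 379; 504];
  [:: 19; 236; 414; 504]; [:: 76; 336; 430; 504]; [:: 95; 301; 393; 504]; [:: 57; 350; 410; 504];
  [:: 114; 201; 261; 507]; [:: 133; 215; 256; 507]; [:: 0; 158; 305; 507]; [:: 38; 220; 343; 507];
  [:: 19; 239; 441; 507]; [:: 76; 291; 406; 507]; [:: 95; 307; 348; 507]; [:: 57; 353; 407; 507];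
  [:: 171; 267; 312; 510]; [:: 190; 251; 310; 510]; [:: 57; 191; 365; 510]; [:: 19; 59; 232; 510];
  [:: 76; 287; 435; 510]; [:: 133; 381; 403; 510]; [:: 0; 116; 397; 510]; [:: 38; 135; 443; 510];
  [:: 171; 273; 303; 513]; [:: 190; 275; 289; 513]; [:: 57; 197; 389; 513]; [:: 19; 71; 256; 513];
  [:: 76; 299; 423; 513]; [:: 133; 387; 427; 513]; [:: 0; 128; 385; 513]; [:: 38; 147; 422; 513];
  [:: 171; 240; 324; 516]; [:: 190; 257; 319; 516]; [:: 57; 221; 371; 516]; [:: 19; 62; 238; 516];
  [:: 76; 290; 432; 516]; [:: 133; 354; 409; 516]; [:: 0; 119; 394; 516]; [:: 38; 138; 452; 516];
  [:: 171; 246; 315; 519]; [:: 190; 281; 298; 519]; [:: 57; 227; 395; 519]; [:: 19; 74; 262; 519];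
  [:: 76; 302; 420; 519]; [:: 133; 360; 433; 519]; [:: 0; 131; 382; 519]; [:: 38; 150; 431; 519];
  [:: 171; 255; 330; 522]; [:: 190; 260; 295; 522]; [:: 57; 179; 374; 522]; [:: 19; 92; 241; 522];
  [:: 76; 320; 402; 522]; [:: 133; 369; 412; 522]; [:: 0; 149; 364; 522]; [:: 38; 168; 428; 522];
  [:: 171; 258; 297; 525]; [:: 190; 272; 313; 525]; [:: 57; 182; 386; 525]; [:: 19; 98; 253; 525];
  [:: 76; 326; 453; 525]; [:: 133; 372; 424; 525]; [:: 0; 155; 358; 525]; [:: 38; 117; 446; 525];
  [:: 228; 327; 348; 528]; [:: 247; 308; 391; 528]; [:: 38; 156; 233; 528]; [:: 76; 134; 322; 528];
  [:: 133; 344; 402; 528]; [:: 0; 172; 442; 528]; [:: 19; 99; 185; 528]; [:: 95; 213; 452; 528];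
  [:: 228; 294; 384; 531]; [:: 247; 332; 343; 531]; [:: 38; 123; 263; 531]; [:: 76; 140; 316; 531];
  [:: 133; 356; 420; 531]; [:: 0; 178; 415; 531]; [:: 19; 66; 212; 531]; [:: 95; 180; 428; 531];
  [:: 228; 333; 357; 534]; [:: 247; 314; 379; 534]; [:: 38; 162; 269; 534]; [:: 76; 164; 292; 534];
  [:: 133; 347; 435; 534]; [:: 0; 202; 421; 534]; [:: 19; 105; 206; 534]; [:: 95; 219; 446; 534];
  [:: 228; 300; 393; 537]; [:: 247; 338; 388; 537]; [:: 38; 129; 242; 537]; [:: 76; 170; 286; 537];
  [:: 133; 359; 453; 537]; [:: 0; 208; 451; 537]; [:: 19; 72; 176; 537]; [:: 95; 186; 422; 537];
  [:: 228; 336; 390; 540]; [:: 247; 317; 373; 540]; [:: 38; 165; 230; 540]; [:: 76; 122; 334; 540];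
  [:: 133; 377; 423; 540]; [:: 0; 217; 439; 540]; [:: 19; 108; 188; 540]; [:: 95; 222; 443; 540];
  [:: 228; 291; 351; 543]; [:: 247; 329; 349; 543]; [:: 38; 120; 245; 543]; [:: 76; 125; 331; 543];
  [:: 133; 383; 432; 543]; [:: 0; 220; 454; 543]; [:: 19; 63; 173; 543]; [:: 95; 177; 431; 543];
  [:: 0; 306; 345; 546]; [:: 19; 289; 395; 546]; [:: 95; 210; 314; 546]; [:: 133; 191; 388; 546];
  [:: 38; 175; 426; 546]; [:: 57; 232; 409; 546]; [:: 76; 156; 230; 546]; [:: 152; 249; 425; 546];
  [:: 0; 318; 363; 549]; [:: 19; 313; 371; 549]; [:: 95; 216; 317; 549]; [:: 133; 197; 379; 549];
  [:: 38; 199; 417; 549]; [:: 57; 256; 412; 549]; [:: 76; 123; 242; 549]; [:: 152; 261; 410; 549];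
  [:: 0; 309; 378; 552]; [:: 19; 295; 389; 552]; [:: 95; 183; 329; 552]; [:: 133; 221; 343; 552];
  [:: 38; 181; 438; 552]; [:: 57; 238; 424; 552]; [:: 76; 162; 233; 552]; [:: 152; 252; 407; 552];
  [:: 0; 321; 396; 555]; [:: 19; 319; 365; 555]; [:: 95; 189; 332; 555]; [:: 133; 227; 391; 555];
  [:: 38; 205; 429; 555]; [:: 57; 262; 427; 555]; [:: 76; 129; 245; 555]; [:: 152; 264; 449; 555];
  [:: 0; 339; 366; 558]; [:: 19; 298; 386; 558]; [:: 95; 198; 308; 558]; [:: 133; 179; 349; 558];
  [:: 38; 184; 444; 558]; [:: 57; 241; 403; 558]; [:: 76; 165; 263; 558]; [:: 152; 282; 455; 558];
  [:: 0; 288; 375; 561]; [:: 19; 310; 374; 561]; [:: 95; 201; 338; 561]; [:: 133; 182; 373; 561];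
  [:: 38; 196; 411; 561]; [:: 57; 253; 433; 561]; [:: 76; 120; 269; 561]; [:: 152; 231; 419; 561];
  [:: 0; 96; 387; 564]; [:: 38; 97; 364; 564]; [:: 152; 270; 395; 564]; [:: 19; 172; 269; 564];
  [:: 95; 232; 423; 564]; [:: 114; 286; 442; 564]; [:: 133; 213; 329; 564]; [:: 209; 327; 401; 564];
  [:: 0; 102; 372; 567]; [:: 38; 109; 382; 567]; [:: 152; 237; 371; 567]; [:: 19; 178; 230; 567];
  [:: 95; 256; 453; 567]; [:: 114; 292; 415; 567]; [:: 133; 180; 308; 567]; [:: 209; 294; 413; 567];
  [:: 0; 69; 369; 570]; [:: 38; 100; 397; 570]; [:: 152; 276; 389; 570]; [:: 19; 202; 245; 570];
  [:: 95; 238; 402; 570]; [:: 114; 316; 421; 570]; [:: 133; 219; 338; 570]; [:: 209; 333; 404; 570];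
  [:: 0; 75; 354; 573]; [:: 38; 112; 358; 573]; [:: 152; 243; 365; 573]; [:: 19; 208; 263; 573];
  [:: 95; 262; 432; 573]; [:: 114; 322; 451; 573]; [:: 133; 186; 317; 573]; [:: 209; 300; 416; 573];
  [:: 0; 84; 360; 576]; [:: 38; 73; 385; 576]; [:: 152; 279; 386; 576]; [:: 19; 217; 233; 576];
  [:: 95; 241; 420; 576]; [:: 114; 331; 439; 576]; [:: 133; 222; 314; 576]; [:: 209; 336; 434; 576];
  [:: 0; 87; 381; 579]; [:: 38; 79; 394; 579]; [:: 152; 234; 374; 579]; [:: 19; 220; 242; 579];
  [:: 95; 253; 435; 579]; [:: 114; 334; 454; 579]; [:: 133; 177; 332; 579]; [:: 209; 291; 440; 579];
  [:: 114; 251; 363; 582]; [:: 133; 173; 274; 582]; [:: 57; 134; 331; 582]; [:: 0; 324; 401; 582];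
  [:: 38; 211; 441; 582]; [:: 76; 192; 364; 582]; [:: 19; 362; 406; 582]; [:: 95; 267; 287; 582];
  [:: 114; 275; 375; 585]; [:: 133; 185; 265; 585]; [:: 57; 140; 322; 585]; [:: 0; 330; 413; 585];
  [:: 38; 223; 408; 585]; [:: 76; 204; 382; 585]; [:: 19; 368; 448; 585]; [:: 95; 273; 299; 585];
  [:: 114; 257; 366; 588]; [:: 133; 176; 229; 588]; [:: 57; 164; 286; 588]; [:: 0; 297; 404; 588];
  [:: 38; 214; 447; 588]; [:: 76; 195; 397; 588]; [:: 19; 392; 445; 588]; [:: 95; 240; 290; 588];
  [:: 114; 281; 378; 591]; [:: 133; 188; 277; 591]; [:: 57; 170; 334; 591]; [:: 0; 303; 416; 591];
  [:: 38; 226; 414; 591]; [:: 76; 207; 358; 591]; [:: 19; 398; 430; 591]; [:: 95; 246; 302; 591];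
  [:: 114; 260; 396; 594]; [:: 133; 206; 235; 594]; [:: 57; 122; 292; 594]; [:: 0; 312; 434; 594];
  [:: 38; 187; 450; 594]; [:: 76; 225; 385; 594]; [:: 19; 350; 436; 594]; [:: 95; 255; 320; 594];
  [:: 114; 272; 345; 597]; [:: 133; 212; 259; 597]; [:: 57; 125; 316; 597]; [:: 0; 315; 440; 597];
  [:: 38; 193; 405; 597]; [:: 76; 174; 394; 597]; [:: 19; 353; 400; 597]; [:: 95; 258; 326; 597];
  [:: 0; 134; 390; 600]; [:: 133; 248; 442; 600]; [:: 114; 173; 419; 600]; [:: 57; 344; 435; 600];
  [:: 38; 58; 237; 600]; [:: 190; 324; 349; 600]; [:: 19; 229; 341; 600]; [:: 95; 192; 286; 600];
  [:: 0; 140; 393; 603]; [:: 133; 254; 415; 603]; [:: 114; 185; 425; 603]; [:: 57; 356; 423; 603];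
  [:: 38; 64; 234; 603]; [:: 190; 330; 391; 603]; [:: 19; 235; 335; 603]; [:: 95; 204; 292; 603];
  [:: 0; 164; 348; 606]; [:: 133; 278; 421; 606]; [:: 114; 176; 449; 606]; [:: 57; 347; 432; 606];
  [:: 38; 88; 279; 606]; [:: 190; 297; 388; 606]; [:: 19; 259; 311; 606]; [:: 95; 195; 316; 606];
  [:: 0; 170; 351; 609]; [:: 133; 284; 451; 609]; [:: 114; 188; 455; 609]; [:: 57; 359; 420; 609];
  [:: 38; 94; 276; 609]; [:: 190; 303; 373; 609]; [:: 19; 265; 305; 609]; [:: 95; 207; 322; 609];
  [:: 0; 122; 384; 612]; [:: 133; 236; 439; 612]; [:: 114; 206; 407; 612]; [:: 57; 377; 402; 612];
  [:: 38; 103; 243; 612]; [:: 190; 312; 379; 612]; [:: 19; 274; 296; 612]; [:: 95; 225; 331; 612];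
  [:: 0; 125; 357; 615]; [:: 133; 239; 454; 615]; [:: 114; 212; 410; 615]; [:: 57; 383; 453; 615];
  [:: 38; 106; 270; 615]; [:: 190; 315; 343; 615]; [:: 19; 277; 293; 615]; [:: 95; 174; 334; 615];
  [:: 0; 115; 308; 618]; [:: 114; 324; 347; 618]; [:: 76; 137; 414; 618]; [:: 190; 325; 404; 618];
  [:: 209; 251; 382; 618]; [:: 57; 270; 445; 618]; [:: 19; 77; 351; 618]; [:: 38; 213; 271; 618];
  [:: 0; 121; 332; 621]; [:: 114; 330; 377; 621]; [:: 76; 161; 447; 621]; [:: 190; 337; 434; 621];
  [:: 209; 275; 394; 621]; [:: 57; 237; 436; 621]; [:: 19; 83; 348; 621]; [:: 38; 180; 244; 621];
  [:: 0; 145; 314; 624]; [:: 114; 297; 383; 624]; [:: 76; 143; 408; 624]; [:: 190; 328; 440; 624];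
  [:: 209; 257; 385; 624]; [:: 57; 276; 400; 624]; [:: 19; 107; 393; 624]; [:: 38; 219; 250; 624];
  [:: 0; 151; 338; 627]; [:: 114; 303; 356; 627]; [:: 76; 167; 441; 627]; [:: 190; 340; 413; 627];
  [:: 209; 281; 397; 627]; [:: 57; 243; 448; 627]; [:: 19; 113; 390; 627]; [:: 38; 186; 280; 627];
  [:: 0; 160; 317; 630]; [:: 114; 312; 344; 630]; [:: 76; 146; 405; 630]; [:: 190; 301; 401; 630];
  [:: 209; 260; 358; 630]; [:: 57; 279; 406; 630]; [:: 19; 65; 357; 630]; [:: 38; 222; 268; 630];
  [:: 0; 163; 329; 633]; [:: 114; 315; 359; 633]; [:: 76; 158; 450; 633]; [:: 190; 307; 416; 633];
  [:: 209; 272; 364; 633]; [:: 57; 234; 430; 633]; [:: 19; 68; 384; 633]; [:: 38; 177; 283; 633];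
  [:: 95; 152; 342; 636]; [:: 133; 361; 399; 636]; [:: 38; 76; 190; 636]; [:: 0; 57; 380; 636];
  [:: 19; 323; 437; 636]; [:: 209; 228; 304; 636]; [:: 247; 285; 418; 636]; [:: 114; 171; 266; 636];
  [:: 57; 209; 399; 639]; [:: 190; 342; 418; 639]; [:: 228; 380; 437; 639]; [:: 95; 171; 285; 639];
  [:: 76; 152; 266; 639]; [:: 0; 323; 361; 639]; [:: 19; 133; 304; 639]; [:: 38; 114; 247; 639];
  [:: 0; 78; 120; 213]; [:: 0; 90; 156; 180]; [:: 0; 81; 129; 219]; [:: 0; 93; 165; 186];
  [:: 0; 111; 162; 222]; [:: 0; 60; 123; 177]; [:: 228; 306; 378; 444]; [:: 228; 318; 366; 429];
  [:: 228; 309; 375; 426]; [:: 228; 321; 363; 411]; [:: 228; 339; 345; 417]; [:: 228; 288; 396; 438];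
  [:: 57; 152; 285; 437]; [:: 0; 76; 247; 437]; [:: 0; 152; 190; 399]; [:: 57; 266; 323; 342];
  [:: 0; 171; 228; 342]; [:: 114; 190; 323; 380]].

Definition bb63 : seq (seq nat) := [::
  [:: 0; 96; 138; 456]; [:: 19; 77; 154; 456]; [:: 38; 191; 309; 456]; [:: 76; 229; 290; 456];
  [:: 152; 286; 423; 456]; [:: 171; 343; 442; 456]; [:: 190; 267; 344; 456]; [:: 266; 381; 404; 456];
  [:: 0; 99; 153; 459]; [:: 19; 80; 160; 459]; [:: 38; 194; 324; 459]; [:: 76; 232; 305; 459];
  [:: 152; 289; 438; 459]; [:: 171; 346; 400; 459]; [:: 190; 270; 350; 459]; [:: 266; 384; 419; 459];
  [:: 0; 102; 168; 462]; [:: 19; 83; 166; 462]; [:: 38; 197; 339; 462]; [:: 76; 235; 320; 462];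
  [:: 152; 292; 453; 462]; [:: 171; 349; 415; 462]; [:: 190; 273; 356; 462]; [:: 266; 387; 434; 462];
  [:: 0; 111; 156; 465]; [:: 19; 92; 127; 465]; [:: 38; 206; 327; 465]; [:: 76; 244; 308; 465];
  [:: 152; 301; 441; 465]; [:: 171; 358; 403; 465]; [:: 190; 282; 374; 465]; [:: 266; 396; 422; 465];
  [:: 0; 63; 144; 468]; [:: 19; 101; 145; 468]; [:: 38; 215; 315; 468]; [:: 76; 253; 296; 468];
  [:: 152; 310; 429; 468]; [:: 171; 367; 448; 468]; [:: 190; 234; 392; 468]; [:: 266; 348; 410; 468];
  [:: 0; 66; 159; 471]; [:: 19; 104; 151; 471]; [:: 38; 218; 330; 471]; [:: 76; 256; 311; 471];
  [:: 152; 313; 444; 471]; [:: 171; 370; 406; 471]; [:: 190; 237; 398; 471]; [:: 266; 351; 425; 471];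
  [:: 0; 81; 120; 474]; [:: 19; 62; 124; 474]; [:: 38; 176; 291; 474]; [:: 76; 271; 329; 474];
  [:: 152; 328; 405; 474]; [:: 171; 385; 424; 474]; [:: 190; 252; 371; 474]; [:: 266; 366; 443; 474];
  [:: 0; 87; 150; 477]; [:: 19; 68; 136; 477]; [:: 38; 182; 321; 477]; [:: 76; 277; 302; 477];
  [:: 152; 334; 435; 477]; [:: 171; 391; 454; 477]; [:: 190; 258; 383; 477]; [:: 266; 372; 416; 477];
  [:: 0; 93; 123; 480]; [:: 19; 74; 148; 480]; [:: 38; 188; 294; 480]; [:: 76; 283; 332; 480];
  [:: 152; 340; 408; 480]; [:: 171; 397; 427; 480]; [:: 190; 264; 395; 480]; [:: 266; 378; 446; 480];
  [:: 57; 135; 177; 483]; [:: 76; 134; 211; 483]; [:: 95; 230; 384; 483]; [:: 133; 286; 347; 483];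
  [:: 209; 343; 402; 483]; [:: 19; 267; 442; 483]; [:: 38; 268; 288; 483]; [:: 0; 305; 404; 483];
  [:: 57; 141; 195; 486]; [:: 76; 137; 217; 486]; [:: 95; 236; 396; 486]; [:: 133; 289; 362; 486];
  [:: 209; 346; 411; 486]; [:: 19; 270; 400; 486]; [:: 38; 274; 297; 486]; [:: 0; 308; 419; 486];
  [:: 57; 147; 213; 489]; [:: 76; 140; 223; 489]; [:: 95; 242; 351; 489]; [:: 133; 292; 377; 489];
  [:: 209; 349; 420; 489]; [:: 19; 273; 415; 489]; [:: 38; 280; 306; 489]; [:: 0; 311; 434; 489];
  [:: 57; 165; 210; 492]; [:: 76; 149; 184; 492]; [:: 95; 260; 387; 492]; [:: 133; 301; 365; 492];
  [:: 209; 358; 447; 492]; [:: 19; 282; 403; 492]; [:: 38; 241; 333; 492]; [:: 0; 320; 422; 492];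
  [:: 57; 126; 207; 495]; [:: 76; 158; 202; 495]; [:: 95; 278; 366; 495]; [:: 133; 310; 353; 495];
  [:: 209; 367; 417; 495]; [:: 19; 234; 448; 495]; [:: 38; 259; 303; 495]; [:: 0; 329; 410; 495];
  [:: 57; 132; 225; 498]; [:: 76; 161; 208; 498]; [:: 95; 284; 378; 498]; [:: 133; 313; 368; 498];
  [:: 209; 370; 426; 498]; [:: 19; 237; 406; 498]; [:: 38; 265; 312; 498]; [:: 0; 332; 425; 498];
  [:: 57; 162; 201; 501]; [:: 76; 119; 181; 501]; [:: 95; 257; 381; 501]; [:: 133; 328; 386; 501];
  [:: 209; 385; 414; 501]; [:: 19; 252; 424; 501]; [:: 38; 238; 300; 501]; [:: 0; 290; 443; 501];
  [:: 57; 117; 180; 504]; [:: 76; 125; 193; 504]; [:: 95; 269; 348; 504]; [:: 133; 334; 359; 504];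
  [:: 209; 391; 432; 504]; [:: 19; 258; 454; 504]; [:: 38; 250; 318; 504]; [:: 0; 296; 416; 504];
  [:: 57; 129; 216; 507]; [:: 76; 131; 205; 507]; [:: 95; 281; 372; 507]; [:: 133; 340; 389; 507];
  [:: 209; 397; 450; 507]; [:: 19; 264; 427; 507]; [:: 38; 262; 336; 507]; [:: 0; 302; 446; 507];
  [:: 114; 192; 234; 510]; [:: 133; 191; 250; 510]; [:: 0; 134; 326; 510]; [:: 38; 172; 385; 510];
  [:: 19; 248; 402; 510]; [:: 76; 324; 442; 510]; [:: 95; 325; 345; 510]; [:: 57; 362; 422; 510];
  [:: 114; 198; 252; 513]; [:: 133; 194; 259; 513]; [:: 0; 137; 335; 513]; [:: 38; 175; 343; 513];
  [:: 19; 251; 411; 513]; [:: 76; 327; 400; 513]; [:: 95; 331; 354; 513]; [:: 57; 365; 434; 513];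
  [:: 114; 204; 270; 516]; [:: 133; 197; 268; 516]; [:: 0; 140; 287; 516]; [:: 38; 178; 358; 516];
  [:: 19; 254; 420; 516]; [:: 76; 330; 415; 516]; [:: 95; 337; 363; 516]; [:: 57; 368; 446; 516];
  [:: 114; 222; 267; 519]; [:: 133; 206; 238; 519]; [:: 0; 149; 314; 519]; [:: 38; 187; 346; 519];
  [:: 19; 263; 447; 519]; [:: 76; 339; 403; 519]; [:: 95; 298; 390; 519]; [:: 57; 377; 425; 519];
  [:: 114; 183; 264; 522]; [:: 133; 215; 265; 522]; [:: 0; 158; 341; 522]; [:: 38; 196; 391; 522];
  [:: 19; 272; 417; 522]; [:: 76; 291; 448; 522]; [:: 95; 316; 360; 522]; [:: 57; 386; 404; 522];
  [:: 114; 189; 282; 525]; [:: 133; 218; 274; 525]; [:: 0; 161; 293; 525]; [:: 38; 199; 349; 525];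
  [:: 19; 275; 426; 525]; [:: 76; 294; 406; 525]; [:: 95; 322; 369; 525]; [:: 57; 389; 416; 525];
  [:: 114; 219; 258; 528]; [:: 133; 176; 262; 528]; [:: 0; 119; 338; 528]; [:: 38; 214; 367; 528];
  [:: 19; 233; 414; 528]; [:: 76; 309; 424; 528]; [:: 95; 295; 357; 528]; [:: 57; 347; 419; 528];
  [:: 114; 174; 237; 531]; [:: 133; 182; 280; 531]; [:: 0; 125; 299; 531]; [:: 38; 220; 397; 531];
  [:: 19; 239; 432; 531]; [:: 76; 315; 454; 531]; [:: 95; 307; 375; 531]; [:: 57; 353; 443; 531];
  [:: 114; 186; 273; 534]; [:: 133; 188; 241; 534]; [:: 0; 131; 317; 534]; [:: 38; 226; 370; 534];
  [:: 19; 245; 450; 534]; [:: 76; 321; 427; 534]; [:: 95; 319; 393; 534]; [:: 57; 359; 410; 534];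
  [:: 171; 249; 291; 537]; [:: 190; 248; 307; 537]; [:: 57; 191; 383; 537]; [:: 19; 59; 253; 537];
  [:: 76; 287; 447; 537]; [:: 133; 381; 442; 537]; [:: 0; 116; 346; 537]; [:: 38; 153; 401; 537];
  [:: 171; 255; 309; 540]; [:: 190; 251; 316; 540]; [:: 57; 194; 392; 540]; [:: 19; 65; 271; 540];
  [:: 76; 293; 420; 540]; [:: 133; 384; 400; 540]; [:: 0; 122; 358; 540]; [:: 38; 156; 407; 540];
  [:: 171; 261; 327; 543]; [:: 190; 254; 325; 543]; [:: 57; 197; 344; 543]; [:: 19; 71; 232; 543];
  [:: 76; 299; 450; 543]; [:: 133; 387; 415; 543]; [:: 0; 128; 370; 543]; [:: 38; 159; 413; 543];
  [:: 171; 279; 324; 546]; [:: 190; 263; 295; 546]; [:: 57; 206; 371; 546]; [:: 19; 89; 229; 546];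
  [:: 76; 317; 426; 546]; [:: 133; 396; 403; 546]; [:: 0; 146; 349; 546]; [:: 38; 168; 431; 546];
  [:: 171; 240; 321; 549]; [:: 190; 272; 322; 549]; [:: 57; 215; 398; 549]; [:: 19; 107; 283; 549];
  [:: 76; 335; 402; 549]; [:: 133; 348; 448; 549]; [:: 0; 164; 385; 549]; [:: 38; 120; 449; 549];
  [:: 171; 246; 339; 552]; [:: 190; 275; 331; 552]; [:: 57; 218; 350; 552]; [:: 19; 113; 244; 552];
  [:: 76; 341; 432; 552]; [:: 133; 351; 406; 552]; [:: 0; 170; 397; 552]; [:: 38; 123; 455; 552];
  [:: 171; 276; 315; 555]; [:: 190; 233; 319; 555]; [:: 57; 176; 395; 555]; [:: 19; 86; 277; 555];
  [:: 76; 314; 411; 555]; [:: 133; 366; 424; 555]; [:: 0; 143; 343; 555]; [:: 38; 138; 428; 555];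
  [:: 171; 231; 294; 558]; [:: 190; 239; 337; 558]; [:: 57; 182; 356; 558]; [:: 19; 98; 256; 558];
  [:: 76; 326; 414; 558]; [:: 133; 372; 454; 558]; [:: 0; 155; 367; 558]; [:: 38; 144; 440; 558];
  [:: 171; 243; 330; 561]; [:: 190; 245; 298; 561]; [:: 57; 188; 374; 561]; [:: 19; 110; 235; 561];
  [:: 76; 338; 417; 561]; [:: 133; 378; 427; 561]; [:: 0; 167; 391; 561]; [:: 38; 150; 452; 561];
  [:: 228; 306; 348; 564]; [:: 247; 287; 352; 564]; [:: 38; 135; 269; 564]; [:: 76; 116; 289; 564];
  [:: 133; 344; 447; 564]; [:: 0; 172; 442; 564]; [:: 19; 96; 212; 564]; [:: 95; 210; 401; 564];
  [:: 228; 312; 366; 567]; [:: 247; 293; 382; 567]; [:: 38; 141; 278; 567]; [:: 76; 122; 301; 567];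
  [:: 133; 350; 420; 567]; [:: 0; 175; 400; 567]; [:: 19; 99; 221; 567]; [:: 95; 213; 407; 567];
  [:: 228; 318; 384; 570]; [:: 247; 299; 355; 570]; [:: 38; 147; 230; 570]; [:: 76; 128; 313; 570];
  [:: 133; 356; 450; 570]; [:: 0; 178; 415; 570]; [:: 19; 102; 173; 570]; [:: 95; 216; 413; 570];
  [:: 228; 336; 381; 573]; [:: 247; 317; 388; 573]; [:: 38; 165; 257; 573]; [:: 76; 146; 292; 573];
  [:: 133; 374; 426; 573]; [:: 0; 187; 403; 573]; [:: 19; 111; 200; 573]; [:: 95; 225; 431; 573];
  [:: 228; 297; 378; 576]; [:: 247; 335; 364; 576]; [:: 38; 126; 284; 576]; [:: 76; 164; 328; 576];
  [:: 133; 392; 402; 576]; [:: 0; 196; 448; 576]; [:: 19; 63; 227; 576]; [:: 95; 177; 449; 576];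
  [:: 228; 303; 396; 579]; [:: 247; 341; 394; 579]; [:: 38; 132; 236; 579]; [:: 76; 170; 340; 579];
  [:: 133; 398; 432; 579]; [:: 0; 199; 406; 579]; [:: 19; 66; 179; 579]; [:: 95; 180; 455; 579];
  [:: 228; 333; 372; 582]; [:: 247; 314; 373; 582]; [:: 38; 162; 281; 582]; [:: 76; 143; 286; 582];
  [:: 133; 371; 411; 582]; [:: 0; 214; 424; 582]; [:: 19; 81; 224; 582]; [:: 95; 195; 428; 582];
  [:: 228; 288; 351; 585]; [:: 247; 326; 376; 585]; [:: 38; 117; 242; 585]; [:: 76; 155; 310; 585];
  [:: 133; 383; 414; 585]; [:: 0; 220; 454; 585]; [:: 19; 87; 185; 585]; [:: 95; 201; 440; 585];
  [:: 228; 300; 387; 588]; [:: 247; 338; 379; 588]; [:: 38; 129; 260; 588]; [:: 76; 167; 334; 588];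
  [:: 133; 395; 417; 588]; [:: 0; 226; 427; 588]; [:: 19; 93; 203; 588]; [:: 95; 207; 452; 588];
  [:: 0; 324; 384; 591]; [:: 19; 325; 371; 591]; [:: 95; 192; 326; 591]; [:: 133; 173; 346; 591];
  [:: 38; 211; 447; 591]; [:: 57; 229; 403; 591]; [:: 76; 135; 257; 591]; [:: 152; 267; 401; 591];
  [:: 0; 327; 396; 594]; [:: 19; 331; 344; 594]; [:: 95; 198; 335; 594]; [:: 133; 179; 358; 594];
  [:: 38; 217; 420; 594]; [:: 57; 232; 415; 594]; [:: 76; 141; 230; 594]; [:: 152; 270; 407; 594];
  [:: 0; 330; 351; 597]; [:: 19; 337; 374; 597]; [:: 95; 204; 287; 597]; [:: 133; 185; 370; 597];
  [:: 38; 223; 450; 597]; [:: 57; 235; 427; 597]; [:: 76; 147; 260; 597]; [:: 152; 273; 413; 597];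
  [:: 0; 339; 387; 600]; [:: 19; 298; 350; 600]; [:: 95; 222; 314; 600]; [:: 133; 203; 349; 600];
  [:: 38; 184; 426; 600]; [:: 57; 244; 406; 600]; [:: 76; 165; 236; 600]; [:: 152; 282; 431; 600];
  [:: 0; 291; 366; 603]; [:: 19; 316; 383; 603]; [:: 95; 183; 341; 603]; [:: 133; 221; 385; 603];
  [:: 38; 202; 402; 603]; [:: 57; 253; 442; 603]; [:: 76; 126; 269; 603]; [:: 152; 234; 449; 603];
  [:: 0; 294; 378; 606]; [:: 19; 322; 356; 606]; [:: 95; 189; 293; 606]; [:: 133; 227; 397; 606];
  [:: 38; 208; 432; 606]; [:: 57; 256; 454; 606]; [:: 76; 132; 242; 606]; [:: 152; 237; 455; 606];
  [:: 0; 309; 381; 609]; [:: 19; 295; 392; 609]; [:: 95; 219; 338; 609]; [:: 133; 200; 343; 609];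
  [:: 38; 181; 411; 609]; [:: 57; 271; 400; 609]; [:: 76; 162; 278; 609]; [:: 152; 252; 428; 609];
  [:: 0; 315; 348; 612]; [:: 19; 307; 395; 612]; [:: 95; 174; 299; 612]; [:: 133; 212; 367; 612];
  [:: 38; 193; 414; 612]; [:: 57; 277; 424; 612]; [:: 76; 117; 281; 612]; [:: 152; 258; 440; 612];
  [:: 0; 321; 372; 615]; [:: 19; 319; 398; 615]; [:: 95; 186; 317; 615]; [:: 133; 224; 391; 615];
  [:: 38; 205; 417; 615]; [:: 57; 283; 448; 615]; [:: 76; 129; 284; 615]; [:: 152; 264; 452; 615];
  [:: 0; 78; 345; 618]; [:: 38; 97; 352; 618]; [:: 152; 249; 371; 618]; [:: 19; 211; 257; 618];
  [:: 95; 268; 447; 618]; [:: 114; 286; 421; 618]; [:: 133; 192; 314; 618]; [:: 209; 306; 428; 618];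
  [:: 0; 84; 354; 621]; [:: 38; 103; 382; 621]; [:: 152; 255; 344; 621]; [:: 19; 217; 230; 621];
  [:: 95; 274; 420; 621]; [:: 114; 289; 430; 621]; [:: 133; 198; 287; 621]; [:: 209; 312; 401; 621];
  [:: 0; 90; 363; 624]; [:: 38; 109; 355; 624]; [:: 152; 261; 374; 624]; [:: 19; 223; 260; 624];
  [:: 95; 280; 450; 624]; [:: 114; 292; 439; 624]; [:: 133; 204; 317; 624]; [:: 209; 318; 431; 624];
  [:: 0; 108; 390; 627]; [:: 38; 70; 388; 627]; [:: 152; 279; 350; 627]; [:: 19; 184; 236; 627];
  [:: 95; 241; 426; 627]; [:: 114; 301; 409; 627]; [:: 133; 222; 293; 627]; [:: 209; 336; 407; 627];
  [:: 0; 69; 360; 630]; [:: 38; 88; 364; 630]; [:: 152; 240; 383; 630]; [:: 19; 202; 269; 630];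
  [:: 95; 259; 402; 630]; [:: 114; 310; 436; 630]; [:: 133; 183; 326; 630]; [:: 209; 297; 440; 630];
  [:: 0; 75; 369; 633]; [:: 38; 94; 394; 633]; [:: 152; 246; 356; 633]; [:: 19; 208; 242; 633];
  [:: 95; 265; 432; 633]; [:: 114; 313; 445; 633]; [:: 133; 189; 299; 633]; [:: 209; 303; 413; 633];
  [:: 0; 105; 357; 636]; [:: 38; 67; 373; 636]; [:: 152; 276; 392; 636]; [:: 19; 181; 278; 636];
  [:: 95; 238; 411; 636]; [:: 114; 328; 433; 636]; [:: 133; 219; 335; 636]; [:: 209; 333; 449; 636];
  [:: 0; 60; 375; 639]; [:: 38; 79; 376; 639]; [:: 152; 231; 395; 639]; [:: 19; 193; 281; 639];
  [:: 95; 250; 414; 639]; [:: 114; 334; 451; 639]; [:: 133; 174; 338; 639]; [:: 209; 288; 452; 639];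
  [:: 0; 72; 393; 642]; [:: 38; 91; 379; 642]; [:: 152; 243; 398; 642]; [:: 19; 205; 284; 642];
  [:: 95; 262; 417; 642]; [:: 114; 340; 412; 642]; [:: 133; 186; 341; 642]; [:: 209; 300; 455; 642];
  [:: 57; 133; 209; 380]; [:: 0; 209; 361; 418]; [:: 0; 190; 266; 380]; [:: 57; 171; 266; 418];
  [:: 0; 114; 171; 304]; [:: 57; 190; 247; 285]; [:: 114; 209; 323; 437]; [:: 0; 76; 133; 247];
  [:: 0; 152; 228; 399]; [:: 228; 285; 380; 418]; [:: 114; 266; 285; 342]; [:: 0; 95; 285; 437];
  [:: 0; 57; 323; 342]; [:: 57; 152; 361; 437]].

Definition bb64 : seq (seq nat) := [::
  [:: 0; 96; 138; 456]; [:: 19; 77; 154; 456]; [:: 38; 191; 309; 456]; [:: 76; 229; 290; 456];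
  [:: 152; 286; 423; 456]; [:: 171; 343; 442; 456]; [:: 190; 267; 344; 456]; [:: 266; 381; 404; 456];
  [:: 0; 99; 153; 459]; [:: 19; 80; 160; 459]; [:: 38; 194; 324; 459]; [:: 76; 232; 305; 459];
  [:: 152; 289; 438; 459]; [:: 171; 346; 400; 459]; [:: 190; 270; 350; 459]; [:: 266; 384; 419; 459];
  [:: 0; 102; 168; 462]; [:: 19; 83; 166; 462]; [:: 38; 197; 339; 462]; [:: 76; 235; 320; 462];
  [:: 152; 292; 453; 462]; [:: 171; 349; 415; 462]; [:: 190; 273; 356; 462]; [:: 266; 387; 434; 462];
  [:: 0; 111; 156; 465]; [:: 19; 92; 127; 465]; [:: 38; 206; 327; 465]; [:: 76; 244; 308; 465];
  [:: 152; 301; 441; 465]; [:: 171; 358; 403; 465]; [:: 190; 282; 374; 465]; [:: 266; 396; 422; 465];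
  [:: 0; 63; 144; 468]; [:: 19; 101; 145; 468]; [:: 38; 215; 315; 468]; [:: 76; 253; 296; 468];
  [:: 152; 310; 429; 468]; [:: 171; 367; 448; 468]; [:: 190; 234; 392; 468]; [:: 266; 348; 410; 468];
  [:: 0; 66; 159; 471]; [:: 19; 104; 151; 471]; [:: 38; 218; 330; 471]; [:: 76; 256; 311; 471];
  [:: 152; 313; 444; 471]; [:: 171; 370; 406; 471]; [:: 190; 237; 398; 471]; [:: 266; 351; 425; 471];
  [:: 0; 81; 120; 474]; [:: 19; 62; 124; 474]; [:: 38; 176; 291; 474]; [:: 76; 271; 329; 474];
  [:: 152; 328; 405; 474]; [:: 171; 385; 424; 474]; [:: 190; 252; 371; 474]; [:: 266; 366; 443; 474];
  [:: 0; 87; 150; 477]; [:: 19; 68; 136; 477]; [:: 38; 182; 321; 477]; [:: 76; 277; 302; 477];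
  [:: 152; 334; 435; 477]; [:: 171; 391; 454; 477]; [:: 190; 258; 383; 477]; [:: 266; 372; 416; 477];
  [:: 0; 93; 123; 480]; [:: 19; 74; 148; 480]; [:: 38; 188; 294; 480]; [:: 76; 283; 332; 480];
  [:: 152; 340; 408; 480]; [:: 171; 397; 427; 480]; [:: 190; 264; 395; 480]; [:: 266; 378; 446; 480];
  [:: 57; 135; 177; 483]; [:: 76; 134; 211; 483]; [:: 95; 230; 384; 483]; [:: 133; 286; 347; 483];
  [:: 209; 343; 402; 483]; [:: 19; 267; 442; 483]; [:: 38; 268; 288; 483]; [:: 0; 305; 404; 483];
  [:: 57; 141; 195; 486]; [:: 76; 137; 217; 486]; [:: 95; 236; 396; 486]; [:: 133; 289; 362; 486];
  [:: 209; 346; 411; 486]; [:: 19; 270; 400; 486]; [:: 38; 274; 297; 486]; [:: 0; 308; 419; 486];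
  [:: 57; 147; 213; 489]; [:: 76; 140; 223; 489]; [:: 95; 242; 351; 489]; [:: 133; 292; 377; 489];
  [:: 209; 349; 420; 489]; [:: 19; 273; 415; 489]; [:: 38; 280; 306; 489]; [:: 0; 311; 434; 489];
  [:: 57; 165; 210; 492]; [:: 76; 149; 184; 492]; [:: 95; 260; 387; 492]; [:: 133; 301; 365; 492];
  [:: 209; 358; 447; 492]; [:: 19; 282; 403; 492]; [:: 38; 241; 333; 492]; [:: 0; 320; 422; 492];
  [:: 57; 126; 207; 495]; [:: 76; 158; 202; 495]; [:: 95; 278; 366; 495]; [:: 133; 310; 353; 495];
  [:: 209; 367; 417; 495]; [:: 19; 234; 448; 495]; [:: 38; 259; 303; 495]; [:: 0; 329; 410; 495];
  [:: 57; 132; 225; 498]; [:: 76; 161; 208; 498]; [:: 95; 284; 378; 498]; [:: 133; 313; 368; 498];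
  [:: 209; 370; 426; 498]; [:: 19; 237; 406; 498]; [:: 38; 265; 312; 498]; [:: 0; 332; 425; 498];
  [:: 57; 162; 201; 501]; [:: 76; 119; 181; 501]; [:: 95; 257; 381; 501]; [:: 133; 328; 386; 501];
  [:: 209; 385; 414; 501]; [:: 19; 252; 424; 501]; [:: 38; 238; 300; 501]; [:: 0; 290; 443; 501];
  [:: 57; 117; 180; 504]; [:: 76; 125; 193; 504]; [:: 95; 269; 348; 504]; [:: 133; 334; 359; 504];
  [:: 209; 391; 432; 504]; [:: 19; 258; 454; 504]; [:: 38; 250; 318; 504]; [:: 0; 296; 416; 504];
  [:: 57; 129; 216; 507]; [:: 76; 131; 205; 507]; [:: 95; 281; 372; 507]; [:: 133; 340; 389; 507];
  [:: 209; 397; 450; 507]; [:: 19; 264; 427; 507]; [:: 38; 262; 336; 507]; [:: 0; 302; 446; 507];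
  [:: 114; 192; 234; 510]; [:: 133; 191; 250; 510]; [:: 0; 134; 326; 510]; [:: 38; 172; 385; 510];
  [:: 19; 248; 402; 510]; [:: 76; 324; 442; 510]; [:: 95; 325; 345; 510]; [:: 57; 362; 422; 510];
  [:: 114; 198; 252; 513]; [:: 133; 194; 259; 513]; [:: 0; 137; 335; 513]; [:: 38; 175; 343; 513];
  [:: 19; 251; 411; 513]; [:: 76; 327; 400; 513]; [:: 95; 331; 354; 513]; [:: 57; 365; 434; 513];
  [:: 114; 204; 270; 516]; [:: 133; 197; 268; 516]; [:: 0; 140; 287; 516]; [:: 38; 178; 358; 516];
  [:: 19; 254; 420; 516]; [:: 76; 330; 415; 516]; [:: 95; 337; 363; 516]; [:: 57; 368; 446; 516];
  [:: 114; 222; 267; 519]; [:: 133; 206; 238; 519]; [:: 0; 149; 314; 519]; [:: 38; 187; 346; 519];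
  [:: 19; 263; 447; 519]; [:: 76; 339; 403; 519]; [:: 95; 298; 390; 519]; [:: 57; 377; 425; 519];
  [:: 114; 183; 264; 522]; [:: 133; 215; 265; 522]; [:: 0; 158; 341; 522]; [:: 38; 196; 391; 522];
  [:: 19; 272; 417; 522]; [:: 76; 291; 448; 522]; [:: 95; 316; 360; 522]; [:: 57; 386; 404; 522];
  [:: 114; 189; 282; 525]; [:: 133; 218; 274; 525]; [:: 0; 161; 293; 525]; [:: 38; 199; 349; 525];
  [:: 19; 275; 426; 525]; [:: 76; 294; 406; 525]; [:: 95; 322; 369; 525]; [:: 57; 389; 416; 525];
  [:: 114; 219; 258; 528]; [:: 133; 176; 262; 528]; [:: 0; 119; 338; 528]; [:: 38; 214; 367; 528];
  [:: 19; 233; 414; 528]; [:: 76; 309; 424; 528]; [:: 95; 295; 357; 528]; [:: 57; 347; 419; 528];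
  [:: 114; 174; 237; 531]; [:: 133; 182; 280; 531]; [:: 0; 125; 299; 531]; [:: 38; 220; 397; 531];
  [:: 19; 239; 432; 531]; [:: 76; 315; 454; 531]; [:: 95; 307; 375; 531]; [:: 57; 353; 443; 531];
  [:: 114; 186; 273; 534]; [:: 133; 188; 241; 534]; [:: 0; 131; 317; 534]; [:: 38; 226; 370; 534];
  [:: 19; 245; 450; 534]; [:: 76; 321; 427; 534]; [:: 95; 319; 393; 534]; [:: 57; 359; 410; 534];
  [:: 171; 249; 291; 537]; [:: 190; 248; 307; 537]; [:: 57; 191; 383; 537]; [:: 19; 59; 253; 537];
  [:: 76; 287; 447; 537]; [:: 133; 381; 442; 537]; [:: 0; 116; 346; 537]; [:: 38; 153; 401; 537];
  [:: 171; 255; 309; 540]; [:: 190; 251; 316; 540]; [:: 57; 194; 392; 540]; [:: 19; 65; 271; 540];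
  [:: 76; 293; 420; 540]; [:: 133; 384; 400; 540]; [:: 0; 122; 358; 540]; [:: 38; 156; 407; 540];
  [:: 171; 261; 327; 543]; [:: 190; 254; 325; 543]; [:: 57; 197; 344; 543]; [:: 19; 71; 232; 543];
  [:: 76; 299; 450; 543]; [:: 133; 387; 415; 543]; [:: 0; 128; 370; 543]; [:: 38; 159; 413; 543];
  [:: 171; 279; 324; 546]; [:: 190; 263; 295; 546]; [:: 57; 206; 371; 546]; [:: 19; 89; 229; 546];
  [:: 76; 317; 426; 546]; [:: 133; 396; 403; 546]; [:: 0; 146; 349; 546]; [:: 38; 168; 431; 546];
  [:: 171; 240; 321; 549]; [:: 190; 272; 322; 549]; [:: 57; 215; 398; 549]; [:: 19; 107; 283; 549];
  [:: 76; 335; 402; 549]; [:: 133; 348; 448; 549]; [:: 0; 164; 385; 549]; [:: 38; 120; 449; 549];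
  [:: 171; 246; 339; 552]; [:: 190; 275; 331; 552]; [:: 57; 218; 350; 552]; [:: 19; 113; 244; 552];
  [:: 76; 341; 432; 552]; [:: 133; 351; 406; 552]; [:: 0; 170; 397; 552]; [:: 38; 123; 455; 552];
  [:: 171; 276; 315; 555]; [:: 190; 233; 319; 555]; [:: 57; 176; 395; 555]; [:: 19; 86; 277; 555];
  [:: 76; 314; 411; 555]; [:: 133; 366; 424; 555]; [:: 0; 143; 343; 555]; [:: 38; 138; 428; 555];
  [:: 171; 231; 294; 558]; [:: 190; 239; 337; 558]; [:: 57; 182; 356; 558]; [:: 19; 98; 256; 558];
  [:: 76; 326; 414; 558]; [:: 133; 372; 454; 558]; [:: 0; 155; 367; 558]; [:: 38; 144; 440; 558];
  [:: 171; 243; 330; 561]; [:: 190; 245; 298; 561]; [:: 57; 188; 374; 561]; [:: 19; 110; 235; 561];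
  [:: 76; 338; 417; 561]; [:: 133; 378; 427; 561]; [:: 0; 167; 391; 561]; [:: 38; 150; 452; 561];
  [:: 228; 306; 348; 564]; [:: 247; 287; 352; 564]; [:: 38; 135; 269; 564]; [:: 76; 116; 289; 564];
  [:: 133; 344; 447; 564]; [:: 0; 172; 442; 564]; [:: 19; 96; 212; 564]; [:: 95; 210; 401; 564];
  [:: 228; 312; 366; 567]; [:: 247; 293; 382; 567]; [:: 38; 141; 278; 567]; [:: 76; 122; 301; 567];
  [:: 133; 350; 420; 567]; [:: 0; 175; 400; 567]; [:: 19; 99; 221; 567]; [:: 95; 213; 407; 567];
  [:: 228; 318; 384; 570]; [:: 247; 299; 355; 570]; [:: 38; 147; 230; 570]; [:: 76; 128; 313; 570];
  [:: 133; 356; 450; 570]; [:: 0; 178; 415; 570]; [:: 19; 102; 173; 570]; [:: 95; 216; 413; 570];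
  [:: 228; 336; 381; 573]; [:: 247; 317; 388; 573]; [:: 38; 165; 257; 573]; [:: 76; 146; 292; 573];
  [:: 133; 374; 426; 573]; [:: 0; 187; 403; 573]; [:: 19; 111; 200; 573]; [:: 95; 225; 431; 573];
  [:: 228; 297; 378; 576]; [:: 247; 335; 364; 576]; [:: 38; 126; 284; 576]; [:: 76; 164; 328; 576];
  [:: 133; 392; 402; 576]; [:: 0; 196; 448; 576]; [:: 19; 63; 227; 576]; [:: 95; 177; 449; 576];
  [:: 228; 303; 396; 579]; [:: 247; 341; 394; 579]; [:: 38; 132; 236; 579]; [:: 76; 170; 340; 579];
  [:: 133; 398; 432; 579]; [:: 0; 199; 406; 579]; [:: 19; 66; 179; 579]; [:: 95; 180; 455; 579];
  [:: 228; 333; 372; 582]; [:: 247; 314; 373; 582]; [:: 38; 162; 281; 582]; [:: 76; 143; 286; 582];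
  [:: 133; 371; 411; 582]; [:: 0; 214; 424; 582]; [:: 19; 81; 224; 582]; [:: 95; 195; 428; 582];
  [:: 228; 288; 351; 585]; [:: 247; 326; 376; 585]; [:: 38; 117; 242; 585]; [:: 76; 155; 310; 585];
  [:: 133; 383; 414; 585]; [:: 0; 220; 454; 585]; [:: 19; 87; 185; 585]; [:: 95; 201; 440; 585];
  [:: 228; 300; 387; 588]; [:: 247; 338; 379; 588]; [:: 38; 129; 260; 588]; [:: 76; 167; 334; 588];
  [:: 133; 395; 417; 588]; [:: 0; 226; 427; 588]; [:: 19; 93; 203; 588]; [:: 95; 207; 452; 588];
  [:: 0; 324; 384; 591]; [:: 19; 325; 371; 591]; [:: 95; 192; 326; 591]; [:: 133; 173; 346; 591];
  [:: 38; 211; 447; 591]; [:: 57; 229; 403; 591]; [:: 76; 135; 257; 591]; [:: 152; 267; 401; 591];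
  [:: 0; 327; 396; 594]; [:: 19; 331; 344; 594]; [:: 95; 198; 335; 594]; [:: 133; 179; 358; 594];
  [:: 38; 217; 420; 594]; [:: 57; 232; 415; 594]; [:: 76; 141; 230; 594]; [:: 152; 270; 407; 594];
  [:: 0; 330; 351; 597]; [:: 19; 337; 374; 597]; [:: 95; 204; 287; 597]; [:: 133; 185; 370; 597];
  [:: 38; 223; 450; 597]; [:: 57; 235; 427; 597]; [:: 76; 147; 260; 597]; [:: 152; 273; 413; 597];
  [:: 0; 339; 387; 600]; [:: 19; 298; 350; 600]; [:: 95; 222; 314; 600]; [:: 133; 203; 349; 600];
  [:: 38; 184; 426; 600]; [:: 57; 244; 406; 600]; [:: 76; 165; 236; 600]; [:: 152; 282; 431; 600];
  [:: 0; 291; 366; 603]; [:: 19; 316; 383; 603]; [:: 95; 183; 341; 603]; [:: 133; 221; 385; 603];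
  [:: 38; 202; 402; 603]; [:: 57; 253; 442; 603]; [:: 76; 126; 269; 603]; [:: 152; 234; 449; 603];
  [:: 0; 294; 378; 606]; [:: 19; 322; 356; 606]; [:: 95; 189; 293; 606]; [:: 133; 227; 397; 606];
  [:: 38; 208; 432; 606]; [:: 57; 256; 454; 606]; [:: 76; 132; 242; 606]; [:: 152; 237; 455; 606];
  [:: 0; 309; 381; 609]; [:: 19; 295; 392; 609]; [:: 95; 219; 338; 609]; [:: 133; 200; 343; 609];
  [:: 38; 181; 411; 609]; [:: 57; 271; 400; 609]; [:: 76; 162; 278; 609]; [:: 152; 252; 428; 609];
  [:: 0; 315; 348; 612]; [:: 19; 307; 395; 612]; [:: 95; 174; 299; 612]; [:: 133; 212; 367; 612];
  [:: 38; 193; 414; 612]; [:: 57; 277; 424; 612]; [:: 76; 117; 281; 612]; [:: 152; 258; 440; 612];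
  [:: 0; 321; 372; 615]; [:: 19; 319; 398; 615]; [:: 95; 186; 317; 615]; [:: 133; 224; 391; 615];
  [:: 38; 205; 417; 615]; [:: 57; 283; 448; 615]; [:: 76; 129; 284; 615]; [:: 152; 264; 452; 615];
  [:: 0; 78; 345; 618]; [:: 38; 97; 352; 618]; [:: 152; 249; 371; 618]; [:: 19; 211; 257; 618];
  [:: 95; 268; 447; 618]; [:: 114; 286; 421; 618]; [:: 133; 192; 314; 618]; [:: 209; 306; 428; 618];
  [:: 0; 84; 354; 621]; [:: 38; 103; 382; 621]; [:: 152; 255; 344; 621]; [:: 19; 217; 230; 621];
  [:: 95; 274; 420; 621]; [:: 114; 289; 430; 621]; [:: 133; 198; 287; 621]; [:: 209; 312; 401; 621];
  [:: 0; 90; 363; 624]; [:: 38; 109; 355; 624]; [:: 152; 261; 374; 624]; [:: 19; 223; 260; 624];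
  [:: 95; 280; 450; 624]; [:: 114; 292; 439; 624]; [:: 133; 204; 317; 624]; [:: 209; 318; 431; 624];
  [:: 0; 108; 390; 627]; [:: 38; 70; 388; 627]; [:: 152; 279; 350; 627]; [:: 19; 184; 236; 627];
  [:: 95; 241; 426; 627]; [:: 114; 301; 409; 627]; [:: 133; 222; 293; 627]; [:: 209; 336; 407; 627];
  [:: 0; 69; 360; 630]; [:: 38; 88; 364; 630]; [:: 152; 240; 383; 630]; [:: 19; 202; 269; 630];
  [:: 95; 259; 402; 630]; [:: 114; 310; 436; 630]; [:: 133; 183; 326; 630]; [:: 209; 297; 440; 630];
  [:: 0; 75; 369; 633]; [:: 38; 94; 394; 633]; [:: 152; 246; 356; 633]; [:: 19; 208; 242; 633];
  [:: 95; 265; 432; 633]; [:: 114; 313; 445; 633]; [:: 133; 189; 299; 633]; [:: 209; 303; 413; 633];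
  [:: 0; 105; 357; 636]; [:: 38; 67; 373; 636]; [:: 152; 276; 392; 636]; [:: 19; 181; 278; 636];
  [:: 95; 238; 411; 636]; [:: 114; 328; 433; 636]; [:: 133; 219; 335; 636]; [:: 209; 333; 449; 636];
  [:: 0; 60; 375; 639]; [:: 38; 79; 376; 639]; [:: 152; 231; 395; 639]; [:: 19; 193; 281; 639];
  [:: 95; 250; 414; 639]; [:: 114; 334; 451; 639]; [:: 133; 174; 338; 639]; [:: 209; 288; 452; 639];
  [:: 0; 72; 393; 642]; [:: 38; 91; 379; 642]; [:: 152; 243; 398; 642]; [:: 19; 205; 284; 642];
  [:: 95; 262; 417; 642]; [:: 114; 340; 412; 642]; [:: 133; 186; 341; 642]; [:: 209; 300; 455; 642];
  [:: 95; 152; 304; 645]; [:: 76; 323; 342; 645]; [:: 57; 190; 437; 645]; [:: 247; 285; 399; 645];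
  [:: 0; 209; 361; 645]; [:: 133; 228; 380; 645]; [:: 38; 171; 266; 645]; [:: 19; 114; 418; 645];
  [:: 0; 76; 266; 437]; [:: 57; 266; 342; 399]; [:: 0; 57; 171; 285]; [:: 57; 152; 209; 228];
  [:: 0; 95; 114; 342]; [:: 0; 133; 247; 304]; [:: 171; 228; 304; 342]; [:: 0; 323; 380; 418];
  [:: 114; 209; 304; 437]; [:: 114; 190; 380; 399]].

Definition bb65 : seq (seq nat) := [::
  [:: 0; 96; 138; 456]; [:: 19; 77; 154; 456]; [:: 38; 191; 309; 456]; [:: 76; 229; 290; 456];
  [:: 152; 286; 423; 456]; [:: 171; 343; 442; 456]; [:: 190; 267; 344; 456]; [:: 266; 381; 404; 456];
  [:: 0; 99; 153; 459]; [:: 19; 80; 160; 459]; [:: 38; 194; 324; 459]; [:: 76; 232; 305; 459];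
  [:: 152; 289; 438; 459]; [:: 171; 346; 400; 459]; [:: 190; 270; 350; 459]; [:: 266; 384; 419; 459];
  [:: 0; 102; 168; 462]; [:: 19; 83; 166; 462]; [:: 38; 197; 339; 462]; [:: 76; 235; 320; 462];
  [:: 152; 292; 453; 462]; [:: 171; 349; 415; 462]; [:: 190; 273; 356; 462]; [:: 266; 387; 434; 462];
  [:: 0; 111; 156; 465]; [:: 19; 92; 127; 465]; [:: 38; 206; 327; 465]; [:: 76; 244; 308; 465];
  [:: 152; 301; 441; 465]; [:: 171; 358; 403; 465]; [:: 190; 282; 374; 465]; [:: 266; 396; 422; 465];
  [:: 0; 63; 144; 468]; [:: 19; 101; 145; 468]; [:: 38; 215; 315; 468]; [:: 76; 253; 296; 468];
  [:: 152; 310; 429; 468]; [:: 171; 367; 448; 468]; [:: 190; 234; 392; 468]; [:: 266; 348; 410; 468];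
  [:: 0; 66; 159; 471]; [:: 19; 104; 151; 471]; [:: 38; 218; 330; 471]; [:: 76; 256; 311; 471];
  [:: 152; 313; 444; 471]; [:: 171; 370; 406; 471]; [:: 190; 237; 398; 471]; [:: 266; 351; 425; 471];
  [:: 0; 81; 120; 474]; [:: 19; 62; 124; 474]; [:: 38; 176; 291; 474]; [:: 76; 271; 329; 474];
  [:: 152; 328; 405; 474]; [:: 171; 385; 424; 474]; [:: 190; 252; 371; 474]; [:: 266; 366; 443; 474];
  [:: 0; 87; 150; 477]; [:: 19; 68; 136; 477]; [:: 38; 182; 321; 477]; [:: 76; 277; 302; 477];
  [:: 152; 334; 435; 477]; [:: 171; 391; 454; 477]; [:: 190; 258; 383; 477]; [:: 266; 372; 416; 477];
  [:: 0; 93; 123; 480]; [:: 19; 74; 148; 480]; [:: 38; 188; 294; 480]; [:: 76; 283; 332; 480];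
  [:: 152; 340; 408; 480]; [:: 171; 397; 427; 480]; [:: 190; 264; 395; 480]; [:: 266; 378; 446; 480];
  [:: 57; 135; 177; 483]; [:: 76; 134; 211; 483]; [:: 95; 230; 384; 483]; [:: 133; 286; 347; 483];
  [:: 209; 343; 402; 483]; [:: 19; 267; 442; 483]; [:: 38; 268; 288; 483]; [:: 0; 305; 404; 483];
  [:: 57; 141; 195; 486]; [:: 76; 137; 217; 486]; [:: 95; 236; 396; 486]; [:: 133; 289; 362; 486];
  [:: 209; 346; 411; 486]; [:: 19; 270; 400; 486]; [:: 38; 274; 297; 486]; [:: 0; 308; 419; 486];
  [:: 57; 147; 213; 489]; [:: 76; 140; 223; 489]; [:: 95; 242; 351; 489]; [:: 133; 292; 377; 489];
  [:: 209; 349; 420; 489]; [:: 19; 273; 415; 489]; [:: 38; 280; 306; 489]; [:: 0; 311; 434; 489];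
  [:: 57; 165; 210; 492]; [:: 76; 149; 184; 492]; [:: 95; 260; 387; 492]; [:: 133; 301; 365; 492];
  [:: 209; 358; 447; 492]; [:: 19; 282; 403; 492]; [:: 38; 241; 333; 492]; [:: 0; 320; 422; 492];
  [:: 57; 126; 207; 495]; [:: 76; 158; 202; 495]; [:: 95; 278; 366; 495]; [:: 133; 310; 353; 495];
  [:: 209; 367; 417; 495]; [:: 19; 234; 448; 495]; [:: 38; 259; 303; 495]; [:: 0; 329; 410; 495];
  [:: 57; 132; 225; 498]; [:: 76; 161; 208; 498]; [:: 95; 284; 378; 498]; [:: 133; 313; 368; 498];
  [:: 209; 370; 426; 498]; [:: 19; 237; 406; 498]; [:: 38; 265; 312; 498]; [:: 0; 332; 425; 498];
  [:: 57; 162; 201; 501]; [:: 76; 119; 181; 501]; [:: 95; 257; 381; 501]; [:: 133; 328; 386; 501];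
  [:: 209; 385; 414; 501]; [:: 19; 252; 424; 501]; [:: 38; 238; 300; 501]; [:: 0; 290; 443; 501];
  [:: 57; 117; 180; 504]; [:: 76; 125; 193; 504]; [:: 95; 269; 348; 504]; [:: 133; 334; 359; 504];
  [:: 209; 391; 432; 504]; [:: 19; 258; 454; 504]; [:: 38; 250; 318; 504]; [:: 0; 296; 416; 504];
  [:: 57; 129; 216; 507]; [:: 76; 131; 205; 507]; [:: 95; 281; 372; 507]; [:: 133; 340; 389; 507];
  [:: 209; 397; 450; 507]; [:: 19; 264; 427; 507]; [:: 38; 262; 336; 507]; [:: 0; 302; 446; 507];
  [:: 114; 192; 234; 510]; [:: 133; 191; 250; 510]; [:: 0; 134; 326; 510]; [:: 38; 172; 385; 510];
  [:: 19; 248; 402; 510]; [:: 76; 324; 442; 510]; [:: 95; 325; 345; 510]; [:: 57; 362; 422; 510];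
  [:: 114; 198; 252; 513]; [:: 133; 194; 259; 513]; [:: 0; 137; 335; 513]; [:: 38; 175; 343; 513];
  [:: 19; 251; 411; 513]; [:: 76; 327; 400; 513]; [:: 95; 331; 354; 513]; [:: 57; 365; 434; 513];
  [:: 114; 204; 270; 516]; [:: 133; 197; 268; 516]; [:: 0; 140; 287; 516]; [:: 38; 178; 358; 516];
  [:: 19; 254; 420; 516]; [:: 76; 330; 415; 516]; [:: 95; 337; 363; 516]; [:: 57; 368; 446; 516];
  [:: 114; 222; 267; 519]; [:: 133; 206; 238; 519]; [:: 0; 149; 314; 519]; [:: 38; 187; 346; 519];
  [:: 19; 263; 447; 519]; [:: 76; 339; 403; 519]; [:: 95; 298; 390; 519]; [:: 57; 377; 425; 519];
  [:: 114; 183; 264; 522]; [:: 133; 215; 265; 522]; [:: 0; 158; 341; 522]; [:: 38; 196; 391; 522];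
  [:: 19; 272; 417; 522]; [:: 76; 291; 448; 522]; [:: 95; 316; 360; 522]; [:: 57; 386; 404; 522];
  [:: 114; 189; 282; 525]; [:: 133; 218; 274; 525]; [:: 0; 161; 293; 525]; [:: 38; 199; 349; 525];
  [:: 19; 275; 426; 525]; [:: 76; 294; 406; 525]; [:: 95; 322; 369; 525]; [:: 57; 389; 416; 525];
  [:: 114; 219; 258; 528]; [:: 133; 176; 262; 528]; [:: 0; 119; 338; 528]; [:: 38; 214; 367; 528];
  [:: 19; 233; 414; 528]; [:: 76; 309; 424; 528]; [:: 95; 295; 357; 528]; [:: 57; 347; 419; 528];
  [:: 114; 174; 237; 531]; [:: 133; 182; 280; 531]; [:: 0; 125; 299; 531]; [:: 38; 220; 397; 531];
  [:: 19; 239; 432; 531]; [:: 76; 315; 454; 531]; [:: 95; 307; 375; 531]; [:: 57; 353; 443; 531];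
  [:: 114; 186; 273; 534]; [:: 133; 188; 241; 534]; [:: 0; 131; 317; 534]; [:: 38; 226; 370; 534];
  [:: 19; 245; 450; 534]; [:: 76; 321; 427; 534]; [:: 95; 319; 393; 534]; [:: 57; 359; 410; 534];
  [:: 171; 249; 291; 537]; [:: 190; 248; 307; 537]; [:: 57; 191; 383; 537]; [:: 19; 59; 253; 537];
  [:: 76; 287; 447; 537]; [:: 133; 381; 442; 537]; [:: 0; 116; 346; 537]; [:: 38; 153; 401; 537];
  [:: 171; 255; 309; 540]; [:: 190; 251; 316; 540]; [:: 57; 194; 392; 540]; [:: 19; 65; 271; 540];
  [:: 76; 293; 420; 540]; [:: 133; 384; 400; 540]; [:: 0; 122; 358; 540]; [:: 38; 156; 407; 540];
  [:: 171; 261; 327; 543]; [:: 190; 254; 325; 543]; [:: 57; 197; 344; 543]; [:: 19; 71; 232; 543];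
  [:: 76; 299; 450; 543]; [:: 133; 387; 415; 543]; [:: 0; 128; 370; 543]; [:: 38; 159; 413; 543];
  [:: 171; 279; 324; 546]; [:: 190; 263; 295; 546]; [:: 57; 206; 371; 546]; [:: 19; 89; 229; 546];
  [:: 76; 317; 426; 546]; [:: 133; 396; 403; 546]; [:: 0; 146; 349; 546]; [:: 38; 168; 431; 546];
  [:: 171; 240; 321; 549]; [:: 190; 272; 322; 549]; [:: 57; 215; 398; 549]; [:: 19; 107; 283; 549];
  [:: 76; 335; 402; 549]; [:: 133; 348; 448; 549]; [:: 0; 164; 385; 549]; [:: 38; 120; 449; 549];
  [:: 171; 246; 339; 552]; [:: 190; 275; 331; 552]; [:: 57; 218; 350; 552]; [:: 19; 113; 244; 552];
  [:: 76; 341; 432; 552]; [:: 133; 351; 406; 552]; [:: 0; 170; 397; 552]; [:: 38; 123; 455; 552];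
  [:: 171; 276; 315; 555]; [:: 190; 233; 319; 555]; [:: 57; 176; 395; 555]; [:: 19; 86; 277; 555];
  [:: 76; 314; 411; 555]; [:: 133; 366; 424; 555]; [:: 0; 143; 343; 555]; [:: 38; 138; 428; 555];
  [:: 171; 231; 294; 558]; [:: 190; 239; 337; 558]; [:: 57; 182; 356; 558]; [:: 19; 98; 256; 558];
  [:: 76; 326; 414; 558]; [:: 133; 372; 454; 558]; [:: 0; 155; 367; 558]; [:: 38; 144; 440; 558];
  [:: 171; 243; 330; 561]; [:: 190; 245; 298; 561]; [:: 57; 188; 374; 561]; [:: 19; 110; 235; 561];
  [:: 76; 338; 417; 561]; [:: 133; 378; 427; 561]; [:: 0; 167; 391; 561]; [:: 38; 150; 452; 561];
  [:: 228; 306; 348; 564]; [:: 247; 287; 352; 564]; [:: 38; 135; 269; 564]; [:: 76; 116; 289; 564];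
  [:: 133; 344; 447; 564]; [:: 0; 172; 442; 564]; [:: 19; 96; 212; 564]; [:: 95; 210; 401; 564];
  [:: 228; 312; 366; 567]; [:: 247; 293; 382; 567]; [:: 38; 141; 278; 567]; [:: 76; 122; 301; 567];
  [:: 133; 350; 420; 567]; [:: 0; 175; 400; 567]; [:: 19; 99; 221; 567]; [:: 95; 213; 407; 567];
  [:: 228; 318; 384; 570]; [:: 247; 299; 355; 570]; [:: 38; 147; 230; 570]; [:: 76; 128; 313; 570];
  [:: 133; 356; 450; 570]; [:: 0; 178; 415; 570]; [:: 19; 102; 173; 570]; [:: 95; 216; 413; 570];
  [:: 228; 336; 381; 573]; [:: 247; 317; 388; 573]; [:: 38; 165; 257; 573]; [:: 76; 146; 292; 573];
  [:: 133; 374; 426; 573]; [:: 0; 187; 403; 573]; [:: 19; 111; 200; 573]; [:: 95; 225; 431; 573];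
  [:: 228; 297; 378; 576]; [:: 247; 335; 364; 576]; [:: 38; 126; 284; 576]; [:: 76; 164; 328; 576];
  [:: 133; 392; 402; 576]; [:: 0; 196; 448; 576]; [:: 19; 63; 227; 576]; [:: 95; 177; 449; 576];
  [:: 228; 303; 396; 579]; [:: 247; 341; 394; 579]; [:: 38; 132; 236; 579]; [:: 76; 170; 340; 579];
  [:: 133; 398; 432; 579]; [:: 0; 199; 406; 579]; [:: 19; 66; 179; 579]; [:: 95; 180; 455; 579];
  [:: 228; 333; 372; 582]; [:: 247; 314; 373; 582]; [:: 38; 162; 281; 582]; [:: 76; 143; 286; 582];
  [:: 133; 371; 411; 582]; [:: 0; 214; 424; 582]; [:: 19; 81; 224; 582]; [:: 95; 195; 428; 582];
  [:: 228; 288; 351; 585]; [:: 247; 326; 376; 585]; [:: 38; 117; 242; 585]; [:: 76; 155; 310; 585];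
  [:: 133; 383; 414; 585]; [:: 0; 220; 454; 585]; [:: 19; 87; 185; 585]; [:: 95; 201; 440; 585];
  [:: 228; 300; 387; 588]; [:: 247; 338; 379; 588]; [:: 38; 129; 260; 588]; [:: 76; 167; 334; 588];
  [:: 133; 395; 417; 588]; [:: 0; 226; 427; 588]; [:: 19; 93; 203; 588]; [:: 95; 207; 452; 588];
  [:: 0; 324; 384; 591]; [:: 19; 325; 371; 591]; [:: 95; 192; 326; 591]; [:: 133; 173; 346; 591];
  [:: 38; 211; 447; 591]; [:: 57; 229; 403; 591]; [:: 76; 135; 257; 591]; [:: 152; 267; 401; 591];
  [:: 0; 327; 396; 594]; [:: 19; 331; 344; 594]; [:: 95; 198; 335; 594]; [:: 133; 179; 358; 594];
  [:: 38; 217; 420; 594]; [:: 57; 232; 415; 594]; [:: 76; 141; 230; 594]; [:: 152; 270; 407; 594];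
  [:: 0; 330; 351; 597]; [:: 19; 337; 374; 597]; [:: 95; 204; 287; 597]; [:: 133; 185; 370; 597];
  [:: 38; 223; 450; 597]; [:: 57; 235; 427; 597]; [:: 76; 147; 260; 597]; [:: 152; 273; 413; 597];
  [:: 0; 339; 387; 600]; [:: 19; 298; 350; 600]; [:: 95; 222; 314; 600]; [:: 133; 203; 349; 600];
  [:: 38; 184; 426; 600]; [:: 57; 244; 406; 600]; [:: 76; 165; 236; 600]; [:: 152; 282; 431; 600];
  [:: 0; 291; 366; 603]; [:: 19; 316; 383; 603]; [:: 95; 183; 341; 603]; [:: 133; 221; 385; 603];
  [:: 38; 202; 402; 603]; [:: 57; 253; 442; 603]; [:: 76; 126; 269; 603]; [:: 152; 234; 449; 603];
  [:: 0; 294; 378; 606]; [:: 19; 322; 356; 606]; [:: 95; 189; 293; 606]; [:: 133; 227; 397; 606];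
  [:: 38; 208; 432; 606]; [:: 57; 256; 454; 606]; [:: 76; 132; 242; 606]; [:: 152; 237; 455; 606];
  [:: 0; 309; 381; 609]; [:: 19; 295; 392; 609]; [:: 95; 219; 338; 609]; [:: 133; 200; 343; 609];
  [:: 38; 181; 411; 609]; [:: 57; 271; 400; 609]; [:: 76; 162; 278; 609]; [:: 152; 252; 428; 609];
  [:: 0; 315; 348; 612]; [:: 19; 307; 395; 612]; [:: 95; 174; 299; 612]; [:: 133; 212; 367; 612];
  [:: 38; 193; 414; 612]; [:: 57; 277; 424; 612]; [:: 76; 117; 281; 612]; [:: 152; 258; 440; 612];
  [:: 0; 321; 372; 615]; [:: 19; 319; 398; 615]; [:: 95; 186; 317; 615]; [:: 133; 224; 391; 615];
  [:: 38; 205; 417; 615]; [:: 57; 283; 448; 615]; [:: 76; 129; 284; 615]; [:: 152; 264; 452; 615];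
  [:: 0; 78; 345; 618]; [:: 38; 97; 352; 618]; [:: 152; 249; 371; 618]; [:: 19; 211; 257; 618];
  [:: 95; 268; 447; 618]; [:: 114; 286; 421; 618]; [:: 133; 192; 314; 618]; [:: 209; 306; 428; 618];
  [:: 0; 84; 354; 621]; [:: 38; 103; 382; 621]; [:: 152; 255; 344; 621]; [:: 19; 217; 230; 621];
  [:: 95; 274; 420; 621]; [:: 114; 289; 430; 621]; [:: 133; 198; 287; 621]; [:: 209; 312; 401; 621];
  [:: 0; 90; 363; 624]; [:: 38; 109; 355; 624]; [:: 152; 261; 374; 624]; [:: 19; 223; 260; 624];
  [:: 95; 280; 450; 624]; [:: 114; 292; 439; 624]; [:: 133; 204; 317; 624]; [:: 209; 318; 431; 624];
  [:: 0; 108; 390; 627]; [:: 38; 70; 388; 627]; [:: 152; 279; 350; 627]; [:: 19; 184; 236; 627];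
  [:: 95; 241; 426; 627]; [:: 114; 301; 409; 627]; [:: 133; 222; 293; 627]; [:: 209; 336; 407; 627];
  [:: 0; 69; 360; 630]; [:: 38; 88; 364; 630]; [:: 152; 240; 383; 630]; [:: 19; 202; 269; 630];
  [:: 95; 259; 402; 630]; [:: 114; 310; 436; 630]; [:: 133; 183; 326; 630]; [:: 209; 297; 440; 630];
  [:: 0; 75; 369; 633]; [:: 38; 94; 394; 633]; [:: 152; 246; 356; 633]; [:: 19; 208; 242; 633];
  [:: 95; 265; 432; 633]; [:: 114; 313; 445; 633]; [:: 133; 189; 299; 633]; [:: 209; 303; 413; 633];
  [:: 0; 105; 357; 636]; [:: 38; 67; 373; 636]; [:: 152; 276; 392; 636]; [:: 19; 181; 278; 636];
  [:: 95; 238; 411; 636]; [:: 114; 328; 433; 636]; [:: 133; 219; 335; 636]; [:: 209; 333; 449; 636];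
  [:: 0; 60; 375; 639]; [:: 38; 79; 376; 639]; [:: 152; 231; 395; 639]; [:: 19; 193; 281; 639];
  [:: 95; 250; 414; 639]; [:: 114; 334; 451; 639]; [:: 133; 174; 338; 639]; [:: 209; 288; 452; 639];
  [:: 0; 72; 393; 642]; [:: 38; 91; 379; 642]; [:: 152; 243; 398; 642]; [:: 19; 205; 284; 642];
  [:: 95; 262; 417; 642]; [:: 114; 340; 412; 642]; [:: 133; 186; 341; 642]; [:: 209; 300; 455; 642];
  [:: 95; 152; 342; 645]; [:: 133; 361; 399; 645]; [:: 38; 76; 190; 645]; [:: 0; 57; 380; 645];
  [:: 19; 323; 437; 645]; [:: 209; 228; 304; 645]; [:: 247; 285; 418; 645]; [:: 114; 171; 266; 645];
  [:: 57; 209; 399; 648]; [:: 190; 342; 418; 648]; [:: 228; 380; 437; 648]; [:: 95; 171; 285; 648];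
  [:: 76; 152; 266; 648]; [:: 0; 323; 361; 648]; [:: 19; 133; 304; 648]; [:: 38; 114; 247; 648];
  [:: 57; 152; 285; 437]; [:: 0; 76; 247; 437]; [:: 0; 152; 190; 399]; [:: 57; 266; 323; 342];
  [:: 0; 171; 228; 342]; [:: 114; 190; 323; 380]].

Definition certificates : seq (nat * seq (seq nat)) :=
  [:: (58, bb58); (59, bb59); (60, bb60); (61, bb61);
      (62, bb62); (63, bb63); (64, bb64); (65, bb65)].

Lemma certificates_ok : all (fun c => (0 < c.1) && base_blocks_ok c.1 c.2) certificates.
Proof. by vm_compute. Qed.

Theorem lemma2p4 :
  forall m : nat, m \in [:: 174; 177; 180; 183; 186; 189; 192; 195] ->
  exists (V : finType) (G B : {set {set V}}),
    is_4GDD G B /\ has_type G (nseq 8 57 ++ [:: m]).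
Proof.
move=> m; rewrite (_ : [:: 174; _; _; _; _; _; _; _] = [seq 3 * c.1 | c <- certificates]) //.
case/mapP=> -[J bb] c_ok ->; have /andP[J_gt0 bb_ok] := allP certificates_ok _ c_ok.
exact: gdd_of_base_blocks J_gt0 bb_ok.
Qed.
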